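(* Let $\alpha,\beta\in\mathbb{R}$ with $\alpha>1$, where $\alpha$ is irrational and of finite type, and let $k\geqslant 2$ be an integer. Then for integers $N\geqslant 3$, $$ \#\{n\leqslant N : n\in\mathcal{B}_{\alpha,\beta},\ n \text{ is } k\text{-free}\}=\alpha^{-1}\zeta(k)^{-1}N+O\!\left(\frac{N\log\log N}{\log N}\right), $$ where $\zeta$ is the Riemann zeta function and the implied constant depends only on $\alpha$.
   Context: An integer $n$ is $k$-free if $p^k\nmid n$ for every prime $p$. The non-homogeneous Beatty sequence is $\mathcal{B}_{\alpha,\beta}=\{n\in\mathbb{N} : n=\lfloor \alpha m+\beta\rfloor \text{ for some } m\in\mathbb{Z}\}$. For an irrational number $\gamma$, its type is $\tau=\sup\{t\in\mathbb{R} : \liminf_{n\to\infty} n^t \|\gamma n\| = 0\}$, where $\|x\|$ is the distance from $x$ to the nearest integer; $\gamma$ is of finite type if $\tau<\infty$. *)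

From Stdlib Require Import Reals Lra Lia ZArith Znumtheory List ClassicalEpsilon.
From Coquelicot Require Import Coquelicot.
Open Scope R_scope.

(* floor x : the greatest integer <= x  (Stdlib's Int_part is the floor) *)
Definition rfloor (x : R) : Z := Int_part x.

Definition dist_nint (x : R) : R :=
  Rmin (x - IZR (rfloor x)) (IZR (rfloor x) + 1 - x).

Definition irrational (x : R) : Prop :=
  forall (p q : Z), q <> 0%Z -> x <> IZR p / IZR q.

(* liminf_{n -> oo} n^t ||gamma n|| = 0  (the sequence is nonnegative, so this
   means: for every eps > 0, n^t ||gamma n|| < eps for infinitely many n) *)
Definition liminf_zero (gamma t : R) : Prop :=
  forall eps : R, eps > 0 -> forall M : nat, exists n : nat,
    (M <= n)%nat /\ (1 <= n)%nat /\
    Rpower (INR n) t * dist_nint (gamma * INR n) < eps.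

(* gamma is of finite type: tau = sup {t | liminf n^t ||gamma n|| = 0} < oo,
   i.e. this (nonempty) set is bounded above. *)
Definition finite_type (gamma : R) : Prop :=
  exists T : R, forall t : R, liminf_zero gamma t -> t <= T.

Definition kfree (k : nat) (n : Z) : Prop :=
  forall p : Z, prime p -> ~ Z.divide (p ^ Z.of_nat k) n.

Definition in_beatty (alpha beta : R) (n : Z) : Prop :=
  (1 <= n)%Z /\ exists m : Z, n = rfloor (alpha * IZR m + beta).

Definition indic (P : Prop) : nat :=
  if excluded_middle_informative P then 1%nat else 0%nat.

Definition count_kfree_beatty (alpha beta : R) (k N : nat) : nat :=
  fold_right Nat.add 0%nat
    (map (fun n : nat => indic (in_beatty alpha beta (Z.of_nat n) /\ kfree k (Z.of_nat n)))
         (seq 1 N)).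

Definition zeta_nat (k : nat) : R := Series (fun n : nat => / (INR (n + 1)) ^ k).

From Stdlib Require Import Reals Lra Lia ZArith Znumtheory List Classical ClassicalEpsilon Wf_nat.
From Coquelicot Require Import Coquelicot.
Open Scope R_scope.

(* Write the k-free indicator of [n] as [sum_(d^k | n) moebius d], so that the count becomes
   [sum_d moebius d * A(d^k)], where [A(q)] counts the Beatty values [floor(alpha m + beta) <= N]
   divisible by [q].  Divisibility by [q] means that the rotation [m alpha/q + (beta - 1)/q]
   crosses an integer within a window of length [1/q], so [A(q)] is a discrepancy problem for
   [alpha/q]: take a Dirichlet approximation [a/b] of [alpha/q]; by Hermite's identity each
   period [b] contributes [b/q + O(1)], and the finite type of [alpha], in the form
   [||alpha n|| >= c n^-T], forces [b >= Y] for approximations of quality [1/(q Y^T)].  Hence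
   [A(q) = M/q + O(M/Y + q Y^T)] with [M ~ N/alpha], used for [q <= P^4 = Y], while larger [q]
   only need [A(q) <= N/q].  With [sum_(d <= R^2) moebius d / d^k = 1/zeta(k) + O(1/R)] and
   [P ~ N^(1/(4T+8))], the total error is [O(N/P^2)], a power saving, far below
   [N log log N / log N]. *)

(** * Floors and finite sums *)

Lemma rfloor_spec x : IZR (rfloor x) <= x < IZR (rfloor x) + 1.
Proof. unfold rfloor. destruct (base_Int_part x). lra. Qed.

Lemma rfloor_unique x z : IZR z <= x < IZR z + 1 -> rfloor x = z.
Proof. intros H. unfold rfloor. symmetry. apply Int_part_spec. lra. Qed.

Lemma rfloor_addZ x n : rfloor (x + IZR n) = (rfloor x + n)%Z.
Proof. apply rfloor_unique. rewrite plus_IZR. pose proof (rfloor_spec x). lra. Qed.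

Lemma rfloor_IZR n : rfloor (IZR n) = n.
Proof. apply rfloor_unique. lra. Qed.

Lemma rfloor_le x y : x <= y -> (rfloor x <= rfloor y)%Z.
Proof.
  intros H. pose proof (rfloor_spec x). pose proof (rfloor_spec y).
  destruct (Z_le_gt_dec (rfloor x) (rfloor y)); auto.
  assert (rfloor y + 1 <= rfloor x)%Z as Hlt by lia.
  apply IZR_le in Hlt. rewrite plus_IZR in Hlt. lra.
Qed.

Lemma rfloor_ge x z : IZR z <= x -> (z <= rfloor x)%Z.
Proof. intros H. rewrite <- (rfloor_IZR z). now apply rfloor_le. Qed.

Lemma rfloor_lt x z : x < IZR z -> (rfloor x < z)%Z.
Proof.
  intros H. pose proof (rfloor_spec x).
  destruct (Z_lt_ge_dec (rfloor x) z); auto. apply Z.ge_le, IZR_le in g. lra.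
Qed.

Lemma rfloor_divZ x q : (0 < q)%Z -> rfloor (x / IZR q) = (rfloor x / q)%Z.
Proof.
  intros Hq. apply rfloor_unique. pose proof (rfloor_spec x).
  pose proof (Z.div_mod (rfloor x) q ltac:(lia)).
  pose proof (Z.mod_pos_bound (rfloor x) q Hq).
  set (d := (rfloor x / q)%Z) in *. set (r := (rfloor x mod q)%Z) in *.
  assert (Hq' : 0 < IZR q) by (apply IZR_lt; lia).
  assert (E : IZR (rfloor x) = IZR q * IZR d + IZR r)
    by (rewrite H0, plus_IZR, mult_IZR; ring).
  assert (0 <= IZR r) by (apply IZR_le; lia).
  assert (IZR r + 1 <= IZR q) by (rewrite <- plus_IZR; apply IZR_le; lia).
  split; [apply Rle_div_r | apply Rlt_div_l]; nra.
Qed.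

Lemma Zdiv_succ_sub x b : (0 < b)%Z ->
  ((x + 1) / b - x / b = if Z.eqb ((x + 1) mod b) 0 then 1 else 0)%Z.
Proof.
  intros Hb.
  pose proof (Z.div_mod x b ltac:(lia)). pose proof (Z.mod_pos_bound x b Hb).
  pose proof (Z.div_mod (x + 1) b ltac:(lia)). pose proof (Z.mod_pos_bound (x + 1) b Hb).
  destruct (Z.eqb_spec ((x + 1) mod b) 0); nia.
Qed.

Fixpoint sumR (f : nat -> R) (n : nat) : R :=
  match n with O => 0 | S n => sumR f n + f n end.

Lemma sumR_ext f g n : (forall i, (i < n)%nat -> f i = g i) -> sumR f n = sumR g n.
Proof.
  induction n; simpl; intros H; auto.
  rewrite IHn by (intros; apply H; lia). rewrite H by lia. auto.
Qed.

Lemma sumR_plus f g n : sumR (fun i => f i + g i) n = sumR f n + sumR g n.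
Proof. induction n; simpl; [lra | rewrite IHn; lra]. Qed.

Lemma sumR_minus f g n : sumR (fun i => f i - g i) n = sumR f n - sumR g n.
Proof. induction n; simpl; [lra | rewrite IHn; lra]. Qed.

Lemma sumR_scal_l c f n : sumR (fun i => c * f i) n = c * sumR f n.
Proof. induction n; simpl; [lra | rewrite IHn; lra]. Qed.

Lemma sumR_scal_r c f n : sumR (fun i => f i * c) n = sumR f n * c.
Proof. induction n; simpl; [lra | rewrite IHn; lra]. Qed.

Lemma sumR_const c n : sumR (fun _ => c) n = INR n * c.
Proof. induction n; simpl sumR; [simpl; lra | rewrite IHn, S_INR; lra]. Qed.

Lemma sumR_le f g n : (forall i, (i < n)%nat -> f i <= g i) -> sumR f n <= sumR g n.
Proof.
  induction n; simpl; intros H; [lra |].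
  pose proof (H n ltac:(lia)).
  assert (sumR f n <= sumR g n) by (apply IHn; intros; apply H; lia). lra.
Qed.

Lemma sumR_nonneg f n : (forall i, (i < n)%nat -> 0 <= f i) -> 0 <= sumR f n.
Proof.
  intros H. replace 0 with (sumR (fun _ => 0) n) by (rewrite sumR_const; lra).
  now apply sumR_le.
Qed.

Lemma sumR_abs f n : Rabs (sumR f n) <= sumR (fun i => Rabs (f i)) n.
Proof.
  induction n; simpl; [rewrite Rabs_R0; lra |].
  pose proof (Rabs_triang (sumR f n) (f n)). lra.
Qed.

Lemma sumR_split f n m : sumR f (n + m) = sumR f n + sumR (fun i => f (n + i)%nat) m.
Proof.
  induction m; simpl; [rewrite Nat.add_0_r; lra |].
  rewrite Nat.add_succ_r. simpl. rewrite IHm. lra.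
Qed.

Lemma sumR_shift f n : sumR f (S n) = f O + sumR (fun i => f (S i)) n.
Proof.
  change (S n) with (1 + n)%nat. rewrite sumR_split. simpl. lra.
Qed.

Lemma sumR_swap (f : nat -> nat -> R) n m :
  sumR (fun i => sumR (f i) m) n = sumR (fun j => sumR (fun i => f i j) n) m.
Proof.
  induction n; simpl; [rewrite sumR_const; simpl; lra |].
  rewrite IHn, <- sumR_plus. auto.
Qed.

Lemma INR_fold_add_seq (f : nat -> nat) s n :
  INR (fold_right Nat.add 0%nat (map f (seq s n))) = sumR (fun i => INR (f (s + i)%nat)) n.
Proof.
  revert s. induction n; intros s; auto.
  cbn [seq map fold_right]. rewrite plus_INR, IHn, sumR_shift, Nat.add_0_r. f_equal.
  apply sumR_ext. intros. do 2 f_equal. lia.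
Qed.

(** * Hermite's identity and rotation counts *)

Definition indR (b : bool) : R := if b then 1 else 0.

Lemma sumR_indR_unique (P : nat -> bool) n :
  (exists r0, (r0 < n)%nat /\ P r0 = true) ->
  (forall r r', (r < n)%nat -> (r' < n)%nat -> P r = true -> P r' = true -> r = r') ->
  sumR (fun r => indR (P r)) n = 1.
Proof.
  induction n; intros [r0 [Hr0 HP]] Hu; [lia |].
  simpl. destruct (Nat.eq_dec r0 n) as [-> | Hne].
  - rewrite HP. unfold indR at 2.
    replace (sumR (fun r => indR (P r)) n) with (sumR (fun _ => 0) n); [rewrite sumR_const; lra |].
    apply sumR_ext. intros i Hi. unfold indR. destruct (P i) eqn:E; auto.
    assert (i = n) by (apply Hu; auto). lia.
  - rewrite IHn; [| exists r0; split; auto; lia | intros; apply Hu; auto; lia].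
    unfold indR. destruct (P n) eqn:E; [| lra].
    assert (r0 = n) by (apply Hu; auto; lia). lia.
Qed.

Lemma Z_unit_step_affine (g : Z -> R) :
  (forall n, g (n + 1)%Z = g n + 1) -> forall n, g n = IZR n + g 0%Z.
Proof.
  intros H n. induction n using Z.peano_ind.
  - simpl; lra.
  - rewrite <- Z.add_1_r, H, IHn, plus_IZR. simpl. lra.
  - pose proof (H (Z.pred n)) as Hp. rewrite Z.add_1_r, Z.succ_pred in Hp.
    rewrite <- Z.sub_1_r in *. rewrite minus_IZR. simpl. lra.
Qed.

(* Shifting [n] by one raises exactly one summand, the one with [b | n + 1 + r a]. *)
Lemma sum_div_shift a b : (0 < b)%Z -> Z.gcd a b = 1%Z -> forall n,
  sumR (fun r => IZR ((n + Z.of_nat r * a) / b)) (Z.to_nat b) =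
  IZR n + sumR (fun r => IZR ((Z.of_nat r * a) / b)) (Z.to_nat b).
Proof.
  intros Hb Hg. apply Z_unit_step_affine. intros n.
  assert (E : forall r, IZR ((n + 1 + Z.of_nat r * a) / b) = IZR ((n + Z.of_nat r * a) / b) +
      indR (Z.eqb ((n + 1 + Z.of_nat r * a) mod b) 0)).
  { intros r. pose proof (Zdiv_succ_sub (n + Z.of_nat r * a) b Hb) as D.
    replace (n + Z.of_nat r * a + 1)%Z with (n + 1 + Z.of_nat r * a)%Z in D by ring.
    unfold indR. destruct (Z.eqb _ 0); apply (f_equal IZR) in D;
      rewrite minus_IZR in D; simpl in D; lra. }
  rewrite (sumR_ext _ _ _ (fun r _ => E r)), sumR_plus. f_equal.
  apply sumR_indR_unique.
  - destruct (Z.gcd_bezout a b 1 Hg) as [u [v Huv]].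
    set (r0 := ((- (n + 1) * u) mod b)%Z).
    pose proof (Z.mod_pos_bound (- (n + 1) * u) b Hb).
    exists (Z.to_nat r0). split; [lia |].
    apply Z.eqb_eq. rewrite Z2Nat.id by lia.
    unfold r0. rewrite Z.add_mod, Z.mul_mod_idemp_l, <- Z.add_mod by lia.
    replace (n + 1 + - (n + 1) * u * a)%Z with ((n + 1) * v * b)%Z.
    + apply Z.mod_mul. lia.
    + assert ((n + 1) * (u * a + v * b) = n + 1)%Z by (rewrite Huv; ring). lia.
  - intros r r' Hr Hr' H1 H2. apply Z.eqb_eq, Z.mod_divide in H1, H2; try lia.
    assert (D : (b | a * (Z.of_nat r - Z.of_nat r'))%Z).
    { replace (a * (Z.of_nat r - Z.of_nat r'))%Z
        with ((n + 1 + Z.of_nat r * a) - (n + 1 + Z.of_nat r' * a))%Z by ring.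
      now apply Z.divide_sub_r. }
    apply Gauss in D; [| apply Zgcd_1_rel_prime; now rewrite Z.gcd_comm].
    destruct D as [c Hc]. assert (c = 0)%Z by nia. lia.
Qed.

Lemma hermite_sum_floor y a b : (0 < b)%Z -> Z.gcd a b = 1%Z ->
  sumR (fun r => IZR (rfloor (y + INR r * IZR a / IZR b))) (Z.to_nat b) =
  IZR (rfloor (IZR b * y)) + sumR (fun r => IZR ((Z.of_nat r * a) / b)) (Z.to_nat b).
Proof.
  intros Hb Hg. rewrite <- sum_div_shift by auto.
  apply sumR_ext. intros r _. f_equal.
  assert (IZR b <> 0) by (apply not_0_IZR; lia).
  replace (y + INR r * IZR a / IZR b) with ((IZR b * y + IZR (Z.of_nat r * a)) / IZR b).
  - now rewrite rfloor_divZ, rfloor_addZ.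
  - rewrite mult_IZR, <- INR_IZR_INZ. field. auto.
Qed.

Definition floor_sum (theta z : R) (n : nat) : R :=
  sumR (fun r => IZR (rfloor (z + INR r * theta))) n.

(* Over one period [b] of a good rational approximation [a/b] of [theta], the floor sum is
   squeezed between two Hermite sums, since each [r theta] is within [1/b] of [r a / b]. *)
Lemma floor_sum_period_bounds theta a b z : (0 < b)%Z -> Z.gcd a b = 1%Z ->
  Rabs (IZR b * theta - IZR a) <= / IZR b ->
  IZR (rfloor (IZR b * z - 1)) + sumR (fun r => IZR ((Z.of_nat r * a) / b)) (Z.to_nat b)
  <= floor_sum theta z (Z.to_nat b) <=
  IZR (rfloor (IZR b * z + 1)) + sumR (fun r => IZR ((Z.of_nat r * a) / b)) (Z.to_nat b).
Proof.
  intros Hb Hg Happ.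
  assert (Hb' : 0 < IZR b) by (apply IZR_lt; lia).
  assert (Hclose : forall r, (r < Z.to_nat b)%nat ->
            Rabs (INR r * theta - INR r * IZR a / IZR b) <= / IZR b).
  { intros r Hr.
    assert (Hrb : 0 <= INR r / IZR b <= 1).
    { split; [apply Rdiv_le_0_compat; [apply pos_INR | lra] |].
      apply Rle_div_l; [lra |]. rewrite Rmult_1_l, INR_IZR_INZ. apply IZR_le. lia. }
    replace (INR r * theta - INR r * IZR a / IZR b)
      with (INR r / IZR b * (IZR b * theta - IZR a)) by (field; lra).
    rewrite Rabs_mult, (Rabs_right (INR r / IZR b)) by lra.
    pose proof (Rabs_pos (IZR b * theta - IZR a)). nra. }
  replace (IZR b * z - 1) with (IZR b * (z - / IZR b)) by (field; lra).
  replace (IZR b * z + 1) with (IZR b * (z + / IZR b)) by (field; lra).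
  rewrite <- !hermite_sum_floor by auto. unfold floor_sum.
  split; apply sumR_le; intros r Hr; apply IZR_le, rfloor_le;
    pose proof (proj1 (Rabs_le_between _ _) (Hclose r Hr)); lra.
Qed.

(* [hit theta L z j = 1] exactly when the interval [(z - L + j theta, z + j theta]] contains
   an integer; otherwise it is [0]. *)
Definition hit (theta L z : R) (j : nat) : R :=
  IZR (rfloor (z + INR j * theta)) - IZR (rfloor (z - L + INR j * theta)).

Lemma hit_01 theta L z j : 0 <= L <= 1 -> 0 <= hit theta L z j <= 1.
Proof.
  intros HL. unfold hit.
  pose proof (rfloor_spec (z + INR j * theta)).
  assert (rfloor (z - L + INR j * theta) <= rfloor (z + INR j * theta))%Z as H1
    by (apply rfloor_le; lra).
  assert (rfloor (z + INR j * theta) - 1 <= rfloor (z - L + INR j * theta))%Z as H2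
    by (apply rfloor_ge; rewrite minus_IZR; lra).
  apply IZR_le in H1, H2. rewrite minus_IZR in H2. lra.
Qed.

Section GoodApproximation.
Variables (theta L : R) (a b : Z).
Hypotheses (Hb : (0 < b)%Z) (Hab : Z.gcd a b = 1%Z)
  (Happrox : Rabs (IZR b * theta - IZR a) <= / IZR b) (HL : 0 <= L <= 1).

Lemma hits_period z : Rabs (sumR (hit theta L z) (Z.to_nat b) - IZR b * L) <= 3.
Proof.
  unfold hit. rewrite sumR_minus.
  fold (floor_sum theta z (Z.to_nat b)) (floor_sum theta (z - L) (Z.to_nat b)).
  pose proof (floor_sum_period_bounds theta a b z Hb Hab Happrox).
  pose proof (floor_sum_period_bounds theta a b (z - L) Hb Hab Happrox).
  pose proof (rfloor_spec (IZR b * z - 1)). pose proof (rfloor_spec (IZR b * z + 1)).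
  pose proof (rfloor_spec (IZR b * (z - L) - 1)). pose proof (rfloor_spec (IZR b * (z - L) + 1)).
  apply Rabs_le. nra.
Qed.

Lemma hits_periods h rem z :
  Rabs (sumR (hit theta L z) (h * Z.to_nat b + rem) - INR (h * Z.to_nat b + rem) * L)
  <= 3 * INR h + INR rem.
Proof.
  revert z. induction h; intros z.
  - cbn [Nat.mul Nat.add].
    replace (3 * INR 0 + INR rem) with (sumR (fun _ => 1) rem) by (rewrite sumR_const; simpl; lra).
    rewrite <- sumR_const, <- sumR_minus.
    eapply Rle_trans; [apply sumR_abs |].
    apply sumR_le. intros i _. pose proof (hit_01 theta L z i HL). apply Rabs_le. lra.
  - replace (S h * Z.to_nat b + rem)%nat with (Z.to_nat b + (h * Z.to_nat b + rem))%nat by lia.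
    rewrite sumR_split, plus_INR.
    rewrite (sumR_ext (fun i => hit theta L z (Z.to_nat b + i)) (hit theta L (z + IZR b * theta))).
    2:{ intros i _. unfold hit. rewrite plus_INR, (INR_IZR_INZ (Z.to_nat b)), Z2Nat.id by lia.
        do 3 f_equal; ring. }
    pose proof (IHh (z + IZR b * theta)) as Hrest. pose proof (hits_period z) as Hfirst.
    rewrite INR_IZR_INZ, Z2Nat.id, S_INR by lia.
    apply Rabs_le_between. apply Rabs_le_between in Hrest, Hfirst. lra.
Qed.

Lemma hits_discrepancy M z :
  Rabs (sumR (hit theta L z) M - INR M * L) <= 3 * INR M / IZR b + IZR b.
Proof.
  set (b' := Z.to_nat b).
  assert (Eb : IZR b = INR b') by (unfold b'; rewrite INR_IZR_INZ, Z2Nat.id by lia; auto).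
  assert (Hb' : 0 < INR b') by (apply lt_0_INR; lia).
  pose proof (Nat.div_mod M b' ltac:(lia)) as HM.
  pose proof (Nat.mod_upper_bound M b' ltac:(lia)).
  pose proof (hits_periods (M / b') (M mod b') z) as Hh.
  fold b' in Hh. rewrite <- (Nat.mul_comm b'), <- HM in Hh.
  eapply Rle_trans; [apply Hh |]. rewrite Eb.
  assert (INR (M mod b') <= INR b') by (apply le_INR; lia).
  assert (INR (M / b') <= INR M / INR b').
  { apply Rle_div_r; [lra |]. rewrite <- mult_INR. apply le_INR.
    rewrite HM at 2. lia. }
  unfold Rdiv in *. lra.
Qed.

End GoodApproximation.

(** * Diophantine approximation *)

Lemma nat_pigeonhole B (f : nat -> nat) : (forall j, (j <= B)%nat -> (f j < B)%nat) ->
  exists i j, (i < j <= B)%nat /\ f i = f j.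
Proof.
  revert f. induction B; intros f H; [specialize (H O ltac:(lia)); lia |].
  destruct (classic (exists i, (i <= B)%nat /\ f i = f (S B))) as [[i [Hi E]] | Hn].
  - exists i, (S B). split; auto; lia.
  - set (g := fun j => if Nat.eqb (f j) B then f (S B) else f j).
    destruct (IHB g) as [i [j [Hij E]]].
    + intros j Hj. unfold g. pose proof (H j ltac:(lia)). pose proof (H (S B) ltac:(lia)).
      destruct (Nat.eqb_spec (f j) B); [| lia].
      assert (f (S B) <> B) by (intro; apply Hn; exists j; split; auto; lia). lia.
    + unfold g in E. exists i, j. split; [lia |].
      destruct (Nat.eqb_spec (f i) B), (Nat.eqb_spec (f j) B); try congruence;
        exfalso; apply Hn; [exists j | exists i]; split; auto; lia.
Qed.

Lemma dirichlet_approx theta (B : nat) : (1 <= B)%nat ->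
  exists b a, (1 <= b <= B)%nat /\ Rabs (INR b * theta - IZR a) < / INR B.
Proof.
  intros HB. assert (HB' : 0 < INR B) by (apply lt_0_INR; lia).
  set (cell := fun j => rfloor (INR B * frac_part (INR j * theta))).
  assert (Hcell : forall j, (0 <= cell j < Z.of_nat B)%Z).
  { intros j. pose proof (base_fp (INR j * theta)). unfold cell. split.
    - apply rfloor_ge. simpl. nra.
    - apply rfloor_lt. rewrite <- INR_IZR_INZ. nra. }
  destruct (nat_pigeonhole B (fun j => Z.to_nat (cell j))) as [i [j [Hij E]]].
  { intros j _. specialize (Hcell j). lia. }
  exists (j - i)%nat, (Int_part (INR j * theta) - Int_part (INR i * theta))%Z.
  split; [lia |].
  assert (Ec : cell i = cell j) by (pose proof (Hcell i); pose proof (Hcell j); lia).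
  unfold cell in Ec.
  pose proof (rfloor_spec (INR B * frac_part (INR j * theta))).
  pose proof (rfloor_spec (INR B * frac_part (INR i * theta))).
  rewrite Ec in *.
  replace (INR (j - i) * theta - IZR (Int_part (INR j * theta) - Int_part (INR i * theta)))
    with (frac_part (INR j * theta) - frac_part (INR i * theta))
    by (unfold frac_part; rewrite minus_INR, minus_IZR by lia; ring).
  assert (Hd : Rabs (INR B * (frac_part (INR j * theta) - frac_part (INR i * theta))) < 1)
    by (apply Rabs_def1; lra).
  rewrite Rabs_mult, (Rabs_right (INR B)) in Hd by lra.
  apply Rmult_lt_reg_l with (INR B); auto. rewrite Rinv_r by lra. lra.
Qed.

(* The least denominator of a Dirichlet approximation is coprime to its numerator,
   since dividing out a common factor would give a smaller one. *)
Lemma dirichlet_approx_coprime theta (B : nat) : (1 <= B)%nat ->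
  exists b a, (1 <= b <= B)%nat /\ Rabs (INR b * theta - IZR a) < / INR B /\
    Z.gcd a (Z.of_nat b) = 1%Z.
Proof.
  intros HB.
  set (P := fun b => (1 <= b <= B)%nat /\ exists a, Rabs (INR b * theta - IZR a) < / INR B).
  destruct (dec_inh_nat_subset_has_unique_least_element P) as [b [[[Hb [a Ha]] Hmin] _]].
  - intros n; apply classic.
  - destruct (dirichlet_approx theta B HB) as [b [a [H1 H2]]]. exists b; split; eauto.
  - exists b, a. do 2 (split; auto).
    set (g := Z.gcd a (Z.of_nat b)).
    destruct (Z.gcd_divide_r a (Z.of_nat b)) as [b' Hb'].
    destruct (Z.gcd_divide_l a (Z.of_nat b)) as [a' Ha'].
    fold g in Hb', Ha'. pose proof (Z.gcd_nonneg a (Z.of_nat b)). fold g in H.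
    destruct (Z.eq_dec g 1) as [E | E]; auto. exfalso.
    assert (1 < g)%Z by (destruct (Z.eq_dec g 0); [rewrite e in Hb'|]; lia).
    assert (0 < b' < Z.of_nat b)%Z by nia.
    enough (P (Z.to_nat b')) as HP by (specialize (Hmin _ HP); lia).
    split; [lia |]. exists a'.
    replace (INR b * theta - IZR a) with (IZR g * (INR (Z.to_nat b') * theta - IZR a')) in Ha.
    + rewrite Rabs_mult, (Rabs_right (IZR g)) in Ha by (apply Rle_ge, IZR_le; lia).
      assert (1 < IZR g) by (apply IZR_lt; lia).
      pose proof (Rabs_pos (INR (Z.to_nat b') * theta - IZR a')). nra.
    + rewrite (INR_IZR_INZ b), Hb', Ha', !mult_IZR, INR_IZR_INZ, Z2Nat.id by lia. ring.
Qed.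

Lemma dist_nint_le x a : dist_nint x <= Rabs (x - IZR a).
Proof.
  unfold dist_nint. pose proof (rfloor_spec x).
  destruct (Z_le_gt_dec a (rfloor x)).
  - apply IZR_le in l. eapply Rle_trans; [apply Rmin_l |]. rewrite Rabs_right; lra.
  - assert (rfloor x + 1 <= a)%Z as Ha by lia. apply IZR_le in Ha. rewrite plus_IZR in Ha.
    eapply Rle_trans; [apply Rmin_r |]. rewrite Rabs_left1; lra.
Qed.

Lemma dist_nint_pos alpha n : irrational alpha -> (1 <= n)%nat -> 0 < dist_nint (alpha * INR n).
Proof.
  intros Hirr Hn. unfold dist_nint. pose proof (rfloor_spec (alpha * INR n)) as [[Hlt | Heq] Hup].
  - apply Rmin_glb_lt; lra.
  - exfalso. apply (Hirr (rfloor (alpha * INR n)) (Z.of_nat n)); [lia |].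
    rewrite Heq, <- INR_IZR_INZ. field. apply not_0_INR. lia.
Qed.

Lemma dist_nint_initial_lower_bound alpha : irrational alpha -> forall M, exists m0, 0 < m0 /\
  forall n, (1 <= n < M)%nat -> m0 <= dist_nint (alpha * INR n).
Proof.
  intros Hirr M. induction M as [| M [m0 [Hm0 H]]]; [exists 1; split; [lra | intros; lia] |].
  destruct (Nat.eq_dec M 0) as [-> | HM]; [exists 1; split; [lra | intros; lia] |].
  exists (Rmin m0 (dist_nint (alpha * INR M))). split.
  - apply Rmin_glb_lt; auto. apply dist_nint_pos; auto; lia.
  - intros n Hn. destruct (Nat.eq_dec n M) as [-> | Hne]; [apply Rmin_r |].
    eapply Rle_trans; [apply Rmin_l | apply H; lia].
Qed.

Lemma nat_above x : exists T : nat, x <= INR T.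
Proof.
  destruct (archimed x) as [Hx _]. exists (Z.to_nat (up x)).
  destruct (Z_le_gt_dec (up x) 0).
  - assert (IZR (up x) <= 0) by (apply IZR_le; lia). pose proof (pos_INR (Z.to_nat (up x))). lra.
  - rewrite INR_IZR_INZ, Z2Nat.id by lia. lra.
Qed.

(* Finite type [tau < T0] yields [||alpha n|| >= eps n^-(T0+1)] beyond some [M], and
   irrationality covers the finitely many [n < M]. *)
Lemma finite_type_diophantine alpha : irrational alpha -> finite_type alpha ->
  exists c0 (T : nat), 0 < c0 /\
    forall n : nat, (1 <= n)%nat -> c0 / INR n ^ T <= dist_nint (alpha * INR n).
Proof.
  intros Hirr [T0 HT0].
  assert (Hnl : ~ liminf_zero alpha (T0 + 1)) by (intro H; apply HT0 in H; lra).
  apply not_all_ex_not in Hnl as [eps Hnl]. apply imply_to_and in Hnl as [Heps Hnl].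
  apply not_all_ex_not in Hnl as [M Hnl].
  assert (HM : forall n, (M <= n)%nat -> (1 <= n)%nat ->
                 eps <= Rpower (INR n) (T0 + 1) * dist_nint (alpha * INR n)).
  { intros n H1 H2. apply Rnot_lt_le. intro H3. apply Hnl. exists n. auto. }
  destruct (dist_nint_initial_lower_bound alpha Hirr M) as [m0 [Hm0 Hmin]].
  destruct (nat_above (T0 + 1)) as [T HT].
  exists (Rmin eps m0), T. split; [apply Rmin_glb_lt; auto |].
  intros n Hn.
  assert (Hn' : 1 <= INR n) by (apply (le_INR 1); lia).
  assert (Hp : 1 <= INR n ^ T) by (apply pow_R1_Rle; lra).
  assert (Hmin_pos : 0 < Rmin eps m0) by (apply Rmin_glb_lt; auto).
  apply Rle_div_l; [lra |].
  destruct (le_lt_dec M n).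
  - assert (Rpower (INR n) (T0 + 1) <= INR n ^ T)
      by (rewrite <- Rpower_pow by lra; apply Rle_Rpower; lra).
    specialize (HM n l Hn). pose proof (Rmin_l eps m0).
    pose proof (dist_nint_pos alpha n Hirr Hn). nra.
  - specialize (Hmin n ltac:(lia)). pose proof (Rmin_r eps m0).
    pose proof (dist_nint_pos alpha n Hirr Hn). nra.
Qed.

Section DiophantineRotation.
Variables (alpha c0 : R) (T : nat).
Hypotheses (Hc0 : 0 < c0)
  (Hdioph : forall n : nat, (1 <= n)%nat -> c0 / INR n ^ T <= dist_nint (alpha * INR n)).

(* A denominator [b] with [||b alpha/q|| < 1/Bq] forces [||alpha b|| < q/Bq <= c0/Y^T],
   so the Diophantine bound keeps [b] at least [Y]. *)
Lemma approx_denominator_large (q Y Bq b : nat) (a : Z) :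
  (1 <= q)%nat -> (1 <= Y)%nat -> (1 <= b)%nat -> INR q * INR Y ^ T / c0 <= INR Bq ->
  Rabs (INR b * (alpha / INR q) - IZR a) < / INR Bq -> INR Y <= INR b.
Proof.
  intros Hq HY Hb HBq Happ.
  assert (Hq' : 1 <= INR q) by (apply (le_INR 1); lia).
  assert (HY' : 1 <= INR Y) by (apply (le_INR 1); lia).
  assert (Hb' : 1 <= INR b) by (apply (le_INR 1); lia).
  assert (HYT : 0 < INR Y ^ T) by (apply pow_lt; lra).
  assert (HB' : 0 < INR Bq) by (apply Rlt_le_trans with (INR q * INR Y ^ T / c0); auto;
    apply Rdiv_lt_0_compat; nra).
  assert (Hdist : dist_nint (alpha * INR b) < INR q / INR Bq).
  { eapply Rle_lt_trans; [apply (dist_nint_le _ (Z.of_nat q * a)) |].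
    replace (alpha * INR b - IZR (Z.of_nat q * a))
      with (INR q * (INR b * (alpha / INR q) - IZR a))
      by (rewrite mult_IZR, <- INR_IZR_INZ; field; lra).
    rewrite Rabs_mult, Rabs_right by lra. unfold Rdiv. apply Rmult_lt_compat_l; lra. }
  assert (HqB : INR q / INR Bq <= c0 / INR Y ^ T).
  { apply Rle_div_l in HBq; [| lra].
    replace (INR q / INR Bq) with (INR q * INR Y ^ T / (INR Bq * INR Y ^ T)) by (field; lra).
    replace (c0 / INR Y ^ T) with (INR Bq * c0 / (INR Bq * INR Y ^ T)) by (field; lra).
    apply Rmult_le_compat_r; [apply Rlt_le, Rinv_0_lt_compat; nra | lra]. }
  destruct (Rle_lt_dec (INR Y) (INR b)) as [| Hlt]; auto. exfalso.
  assert (INR b ^ T <= INR Y ^ T) by (apply pow_incr; lra).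
  assert (c0 / INR Y ^ T <= c0 / INR b ^ T)
    by (apply Rmult_le_compat_l; [lra | apply Rinv_le_contravar; [apply pow_lt |]; lra]).
  pose proof (Hdioph b Hb). lra.
Qed.

Lemma hits_rotation_discrepancy (q Y Bq : nat) :
  (1 <= q)%nat -> (1 <= Y)%nat -> (1 <= Bq)%nat -> INR q * INR Y ^ T / c0 <= INR Bq ->
  forall M z, Rabs (sumR (hit (alpha / INR q) (/ INR q) z) M - INR M / INR q)
              <= 3 * INR M / INR Y + INR Bq.
Proof.
  intros Hq HY HB HBq M z.
  assert (Hq' : 1 <= INR q) by (apply (le_INR 1); lia).
  destruct (dirichlet_approx_coprime (alpha / INR q) Bq HB) as [b [a [Hb [Happ Hg]]]].
  assert (HbY : INR Y <= INR b) by (apply (approx_denominator_large q Y Bq b a); auto; lia).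
  assert (HbB : INR b <= INR Bq) by (apply le_INR; lia).
  assert (HY' : 0 < INR Y) by (apply lt_0_INR; lia).
  rewrite (INR_IZR_INZ b) in Happ, HbY, HbB.
  pose proof (hits_discrepancy (alpha / INR q) (/ INR q) a (Z.of_nat b) ltac:(lia) Hg)
    as Hdisc.
  eapply Rle_trans; [apply Hdisc |].
  - left. eapply Rlt_le_trans; [apply Happ | apply Rinv_le_contravar; lra].
  - split; [apply Rlt_le, Rinv_0_lt_compat; lra |].
    rewrite <- Rinv_1. apply Rinv_le_contravar; lra.
  - apply Rplus_le_compat; auto. unfold Rdiv. apply Rmult_le_compat_l.
    + pose proof (pos_INR M). lra.
    + apply Rinv_le_contravar; lra.
Qed.

End DiophantineRotation.

(** * Beatty sequences *)

Definition rceil (x : R) : Z := (- rfloor (- x))%Z.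

Lemma rceil_spec x : x <= IZR (rceil x) < x + 1.
Proof. unfold rceil. rewrite opp_IZR. pose proof (rfloor_spec (- x)). lra. Qed.

Section Beatty.
Variables alpha beta : R.
Hypothesis Halpha : alpha > 1.

Definition beatty (m : Z) : Z := rfloor (alpha * IZR m + beta).

(* The least [m] with [alpha m + beta >= N + 1]: the elements [<= N] of the Beatty sequence
   are exactly the [beatty m] with [beatty_index 0 <= m < beatty_index N]. *)
Definition beatty_index (N : nat) : Z := rceil ((INR N + 1 - beta) / alpha).

Lemma beatty_index_spec N :
  INR N + 1 <= alpha * IZR (beatty_index N) + beta < INR N + 1 + alpha.
Proof.
  unfold beatty_index. pose proof (rceil_spec ((INR N + 1 - beta) / alpha)).
  assert ((INR N + 1 - beta) / alpha * alpha = INR N + 1 - beta) by (field; lra).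
  split; nra.
Qed.

Lemma beatty_index_step N :
  (beatty_index (S N) = beatty_index N \/ beatty_index (S N) = beatty_index N + 1)%Z.
Proof.
  pose proof (beatty_index_spec N) as H0. pose proof (beatty_index_spec (S N)) as H1.
  rewrite S_INR in H1.
  enough (beatty_index N <= beatty_index (S N) <= beatty_index N + 1)%Z by lia.
  split; apply Z.lt_succ_r, lt_IZR; rewrite succ_IZR, ?plus_IZR; nra.
Qed.

Lemma beatty_index0_le N : (beatty_index 0 <= beatty_index N)%Z.
Proof. induction N; [lia | destruct (beatty_index_step N); lia]. Qed.

Lemma beatty_eq m n : beatty m = n <-> IZR n <= alpha * IZR m + beta < IZR n + 1.
Proof. split; [intros <-; apply rfloor_spec | apply rfloor_unique]. Qed.

Lemma beatty_index_succ_iff N :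
  beatty_index (S N) = (beatty_index N + 1)%Z <-> beatty (beatty_index N) = Z.of_nat (S N).
Proof.
  pose proof (beatty_index_spec N). pose proof (beatty_index_spec (S N)) as HS.
  rewrite S_INR in HS. rewrite beatty_eq, <- INR_IZR_INZ, S_INR. split.
  - intros E. rewrite E, plus_IZR in HS. split; lra.
  - intros [_ H1]. destruct (beatty_index_step N) as [E | E]; auto. rewrite E in HS. lra.
Qed.

Lemma in_beatty_iff N :
  in_beatty alpha beta (Z.of_nat (S N)) <-> beatty (beatty_index N) = Z.of_nat (S N).
Proof.
  split.
  - intros [_ [m Hm]]. symmetry in Hm. fold (beatty m) in Hm.
    pose proof (beatty_index_spec N).
    apply beatty_eq in Hm. rewrite <- INR_IZR_INZ, S_INR in Hm.
    assert (m = beatty_index N) as ->.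
    { destruct (Z.lt_trichotomy m (beatty_index N)) as [L | [E | L]]; auto; exfalso;
        apply Zlt_le_succ, IZR_le in L; rewrite succ_IZR in L; nra. }
    apply beatty_eq. rewrite <- INR_IZR_INZ, S_INR. auto.
  - intros E. split; [lia |]. exists (beatty_index N). now rewrite <- E.
Qed.

Definition beatty_length (N : nat) : nat := Z.to_nat (beatty_index N - beatty_index 0).

Definition beatty_at (j : nat) : Z := beatty (beatty_index 0 + Z.of_nat j).

Lemma count_beatty_reindex (P : Z -> Prop) N :
  INR (fold_right Nat.add 0%nat
         (map (fun n : nat => indic (in_beatty alpha beta (Z.of_nat n) /\ P (Z.of_nat n)))
              (seq 1 N)))
  = sumR (fun j => INR (indic (P (beatty_at j)))) (beatty_length N).
Proof.
  rewrite INR_fold_add_seq. unfold beatty_length. induction N.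
  - simpl. now rewrite Z.sub_diag.
  - cbn [sumR]. rewrite IHN. pose proof (beatty_index0_le N).
    replace (Z.of_nat (1 + N)) with (Z.of_nat (S N)) by (f_equal; lia).
    destruct (beatty_index_step N) as [E | E]; rewrite E.
    + unfold indic at 2. destruct (excluded_middle_informative _) as [[Hb _] |]; [| simpl; lra].
      apply in_beatty_iff, beatty_index_succ_iff in Hb. lia.
    + replace (Z.to_nat (beatty_index N + 1 - beatty_index 0))
        with (S (Z.to_nat (beatty_index N - beatty_index 0))) by lia.
      cbn [sumR]. f_equal. unfold beatty_at.
      replace (beatty_index 0 + Z.of_nat (Z.to_nat (beatty_index N - beatty_index 0)))%Z
        with (beatty_index N) by lia.
      pose proof E as E'. apply beatty_index_succ_iff in E'. rewrite E'.
      unfold indic. do 2 destruct (excluded_middle_informative _); try tauto.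
      exfalso. apply n. split; auto. now apply in_beatty_iff.
Qed.

Lemma beatty_length_approx N : Rabs (INR (beatty_length N) - INR N / alpha) <= 1.
Proof.
  unfold beatty_length. pose proof (beatty_index0_le N).
  rewrite INR_IZR_INZ, Z2Nat.id, minus_IZR by lia.
  pose proof (beatty_index_spec N). pose proof (beatty_index_spec 0). simpl INR in *.
  apply Rabs_le. assert (INR N / alpha * alpha = INR N) by (field; lra). split; nra.
Qed.

Lemma beatty_at_range N j : (j < beatty_length N)%nat -> (1 <= beatty_at j <= Z.of_nat N)%Z.
Proof.
  unfold beatty_length, beatty_at, beatty. intros Hj.
  pose proof (beatty_index_spec N). pose proof (beatty_index_spec 0). simpl INR in *.
  set (m := (beatty_index 0 + Z.of_nat j)%Z).
  assert (IZR (beatty_index 0) <= IZR m) by (apply IZR_le; unfold m; lia).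
  assert (IZR m <= IZR (beatty_index N) - 1) by (rewrite <- minus_IZR; apply IZR_le; unfold m; lia).
  split; [apply rfloor_ge; nra |].
  apply Zlt_succ_le, rfloor_lt. rewrite succ_IZR, <- INR_IZR_INZ. nra.
Qed.

Lemma beatty_at_incr j : (beatty_at j + 1 <= beatty_at (S j))%Z.
Proof.
  unfold beatty_at, beatty. rewrite Nat2Z.inj_succ, Z.add_succ_r.
  set (m := (beatty_index 0 + Z.of_nat j)%Z).
  pose proof (rfloor_spec (alpha * IZR m + beta)).
  apply rfloor_ge. rewrite plus_IZR, succ_IZR. simpl IZR. nra.
Qed.

Definition divides_ind (q : nat) (n : Z) : R := if Z.eqb (n mod Z.of_nat q) 0 then 1 else 0.

Lemma divides_ind_diff (q : nat) n : (1 <= q)%nat ->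
  divides_ind q n = IZR (n / Z.of_nat q) - IZR ((n - 1) / Z.of_nat q).
Proof.
  intros Hq. unfold divides_ind. pose proof (Zdiv_succ_sub (n - 1) (Z.of_nat q) ltac:(lia)) as D.
  rewrite Z.sub_add in D.
  destruct (Z.eqb _ 0); apply (f_equal IZR) in D; rewrite minus_IZR in D; simpl in D; lra.
Qed.

(* The divisibility of a Beatty value by [q] is a hit of the rotation by [alpha/q]. *)
Lemma hit_beatty_divides (q : nat) m j : (1 <= q)%nat ->
  hit (alpha / INR q) (/ INR q) ((alpha * IZR m + beta) / INR q) j =
  divides_ind q (beatty (m + Z.of_nat j)).
Proof.
  intros Hq. unfold hit, beatty.
  assert (Hq' : 0 < INR q) by (apply lt_0_INR; lia).
  set (x := alpha * IZR (m + Z.of_nat j) + beta).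
  replace ((alpha * IZR m + beta) / INR q + INR j * (alpha / INR q)) with (x / IZR (Z.of_nat q))
    by (unfold x; rewrite <- INR_IZR_INZ, plus_IZR, <- INR_IZR_INZ; field; lra).
  replace ((alpha * IZR m + beta) / INR q - / INR q + INR j * (alpha / INR q))
    with ((x + IZR (-1)) / IZR (Z.of_nat q))
    by (unfold x; rewrite <- INR_IZR_INZ, plus_IZR, <- INR_IZR_INZ; field; lra).
  rewrite !rfloor_divZ, rfloor_addZ, divides_ind_diff; [reflexivity | lia ..].
Qed.

Definition beatty_multiples (q N : nat) : R :=
  sumR (fun j => divides_ind q (beatty_at j)) (beatty_length N).

Lemma beatty_multiples_nonneg q N : 0 <= beatty_multiples q N.
Proof. apply sumR_nonneg. intros. unfold divides_ind. destruct (Z.eqb _ _); lra. Qed.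

(* The Beatty values are strictly increasing integers in [1, N]. *)
Lemma beatty_multiples_le (q N : nat) : (1 <= q)%nat -> beatty_multiples q N <= INR N / INR q.
Proof.
  intros Hq. unfold beatty_multiples. set (qz := Z.of_nat q).
  assert (Hqr : 0 < INR q) by (apply lt_0_INR; lia).
  assert (Htele : forall J, sumR (fun j => divides_ind q (beatty_at j)) (S J)
                          <= IZR (beatty_at J / qz) - IZR ((beatty_at O - 1) / qz)).
  { induction J.
    - cbn [sumR]. rewrite (divides_ind_diff q) by auto. fold qz. lra.
    - change (sumR ?f (S (S J))) with (sumR f (S J) + f (S J)). cbv beta.
      rewrite (divides_ind_diff q (beatty_at (S J))) by auto. fold qz.
      assert (beatty_at J / qz <= (beatty_at (S J) - 1) / qz)%Z as Hle
        by (apply Z.div_le_mono; [unfold qz; lia | pose proof (beatty_at_incr J); lia]).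
      apply IZR_le in Hle. lra. }
  destruct (beatty_length N) as [| J] eqn:EM.
  { simpl. apply Rdiv_le_0_compat; [apply pos_INR | lra]. }
  eapply Rle_trans; [apply Htele |].
  pose proof (beatty_at_range N J ltac:(lia)). pose proof (beatty_at_range N 0 ltac:(lia)).
  assert (0 <= (beatty_at O - 1) / qz)%Z by (apply Z.div_pos; unfold qz; lia).
  assert (beatty_at J / qz <= Z.of_nat N / qz)%Z by (apply Z.div_le_mono; unfold qz; lia).
  assert (IZR (Z.of_nat N / qz) <= INR N / INR q).
  { apply Rle_div_r; [lra |]. rewrite !INR_IZR_INZ, <- mult_IZR. apply IZR_le.
    rewrite Z.mul_comm. apply Z.mul_div_le. unfold qz; lia. }
  apply IZR_le in H1, H2. lra.
Qed.

Lemma beatty_multiples_trivial_error (q N : nat) : (1 <= q)%nat ->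
  Rabs (beatty_multiples q N - INR (beatty_length N) / INR q)
  <= INR N / INR q + INR (beatty_length N) / INR q.
Proof.
  intros Hq. pose proof (beatty_multiples_le q N Hq). pose proof (beatty_multiples_nonneg q N).
  assert (0 <= INR (beatty_length N) / INR q)
    by (apply Rdiv_le_0_compat; [apply pos_INR | apply lt_0_INR; lia]).
  apply Rabs_le. lra.
Qed.

Lemma beatty_multiples_discrepancy c0 (T q Y N : nat) :
  0 < c0 -> (1 <= q)%nat -> (1 <= Y)%nat ->
  (forall n : nat, (1 <= n)%nat -> c0 / INR n ^ T <= dist_nint (alpha * INR n)) ->
  Rabs (beatty_multiples q N - INR (beatty_length N) / INR q)
  <= 3 * INR (beatty_length N) / INR Y + INR q * INR Y ^ T / c0 + 1.
Proof.
  intros Hc0 Hq HY Hdioph.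
  set (x := INR q * INR Y ^ T / c0).
  assert (Hx : 0 < x).
  { unfold x. apply Rdiv_lt_0_compat; auto.
    apply Rmult_lt_0_compat; [| apply pow_lt]; apply lt_0_INR; lia. }
  destruct (archimed x) as [U1 U2].
  assert (Hup : (1 <= up x)%Z) by (assert (0 < up x)%Z by (apply lt_IZR; simpl; lra); lia).
  set (Bq := Z.to_nat (up x)).
  assert (EB : INR Bq = IZR (up x)) by (unfold Bq; rewrite INR_IZR_INZ, Z2Nat.id by lia; auto).
  pose proof (hits_rotation_discrepancy alpha c0 T Hc0 Hdioph q Y Bq Hq HY ltac:(unfold Bq; lia)
                ltac:(fold x; lra) (beatty_length N)
                ((alpha * IZR (beatty_index 0) + beta) / INR q)) as Hdisc.
  rewrite (sumR_ext _ (fun j => divides_ind q (beatty_at j))) in Hdisc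
    by (intros j _; apply hit_beatty_divides; auto).
  fold (beatty_multiples q N) in Hdisc. fold x. lra.
Qed.

End Beatty.

(** * The Moebius function *)

Open Scope Z_scope.

(* Returns [d] itself when no divisor is found within [fuel] steps. *)
Fixpoint least_divisor_from (fuel : nat) (e d : Z) : Z :=
  match fuel with
  | O => d
  | S f => if Z.eqb (d mod e) 0 then e else least_divisor_from f (e + 1) d
  end.

Lemma least_divisor_from_spec d : forall fuel e, 2 <= e <= d -> d < e + Z.of_nat fuel ->
  let s := least_divisor_from fuel e d in
  e <= s <= d /\ d mod s = 0 /\ forall e', e <= e' < s -> d mod e' <> 0.
Proof.
  induction fuel; intros e He Hf; simpl in *; [lia |].
  destruct (Z.eqb_spec (d mod e) 0); [repeat split; auto; lia |].
  assert (e <> d) by (intro; subst; rewrite Z.mod_same in n; lia).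
  destruct (IHfuel (e + 1)) as [A [B C]]; try lia.
  repeat split; auto; try lia.
  intros e' He'. destruct (Z.eq_dec e' e); [subst; auto | apply C; lia].
Qed.

Definition least_factor (d : Z) : Z := least_divisor_from (Z.to_nat d) 2 d.

Lemma least_factor_spec d : 2 <= d ->
  2 <= least_factor d <= d /\ (least_factor d | d) /\
  forall e, 2 <= e < least_factor d -> ~ (e | d).
Proof.
  intros Hd. destruct (least_divisor_from_spec d (Z.to_nat d) 2) as [A [B C]]; try lia.
  unfold least_factor. split; [exact A | split].
  - apply Z.mod_divide; auto; lia.
  - intros e He Hdiv. apply (C e He). apply Z.mod_divide; auto; lia.
Qed.

Lemma least_factor_prime d : 2 <= d -> prime (least_factor d).
Proof.
  intros Hd. destruct (least_factor_spec d Hd) as [A [B C]].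
  apply prime_intro; [lia |]. intros n Hn. apply Zgcd_1_rel_prime.
  set (g := Z.gcd n (least_factor d)).
  assert (g | n) by apply Z.gcd_divide_l. assert (g | least_factor d) by apply Z.gcd_divide_r.
  assert (0 <= g) by apply Z.gcd_nonneg.
  assert (g <> 0) by (intro E; rewrite E in H; destruct H; lia).
  assert (g <= n) by (apply Z.divide_pos_le; auto; lia).
  destruct (Z.eq_dec g 1); auto. exfalso. apply (C g); [lia |]. eapply Z.divide_trans; eauto.
Qed.

Lemma least_factor_lt d : 2 <= d -> 1 <= d / least_factor d < d.
Proof.
  intros Hd. destruct (least_factor_spec d Hd) as [A [[c Hc] _]].
  set (s := least_factor d) in *.
  assert (d / s = c) as -> by (rewrite Hc, Z.div_mul; lia). nia.
Qed.

Lemma least_factor_of_multiple p d : 2 <= p -> 2 <= d ->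
  (least_factor (p * d) | d) -> least_factor d = least_factor (p * d).
Proof.
  intros Hp Hd Hs.
  destruct (least_factor_spec (p * d) ltac:(nia)) as [A [_ C]].
  destruct (least_factor_spec d Hd) as [A' [B' C']].
  assert (least_factor (p * d) <= d) by (apply Z.divide_pos_le; auto; lia).
  destruct (Z.lt_trichotomy (least_factor d) (least_factor (p * d))) as [L | [E | L]]; auto.
  - exfalso. apply (C (least_factor d)); [lia |]. now apply Z.divide_mul_r.
  - exfalso. apply (C' (least_factor (p * d))); auto; lia.
Qed.

(* The Moebius function, recursing on [d / s] with [s] the least prime factor of [d];
   [fuel = d] always suffices. *)
Fixpoint moebius_fuel (fuel : nat) (d : Z) : Z :=
  match fuel with
  | O => 1
  | S f =>
      if Z.leb d 1 then 1 else
      let s := least_factor d in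
      if Z.eqb ((d / s) mod s) 0 then 0 else - moebius_fuel f (d / s)
  end.

Definition moebius (d : Z) : Z := moebius_fuel (Z.to_nat d) d.

Lemma moebius_fuel_enough : forall n f1 f2 d, 1 <= d <= Z.of_nat n ->
  (Z.to_nat d <= f1)%nat -> (Z.to_nat d <= f2)%nat -> moebius_fuel f1 d = moebius_fuel f2 d.
Proof.
  induction n; intros f1 f2 d Hd H1 H2; [lia |].
  destruct f1 as [| f1]; [lia |]. destruct f2 as [| f2]; [lia |].
  simpl. destruct (Z.leb_spec d 1); auto.
  pose proof (least_factor_lt d ltac:(lia)).
  destruct (Z.eqb _ 0); auto. f_equal. apply IHn; lia.
Qed.

Lemma moebius_unfold d : 2 <= d ->
  moebius d = if Z.eqb ((d / least_factor d) mod least_factor d) 0 then 0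
              else - moebius (d / least_factor d).
Proof.
  intros Hd. unfold moebius at 1. destruct (Z.to_nat d) eqn:E; [lia |].
  simpl. destruct (Z.leb_spec d 1); [lia |].
  pose proof (least_factor_lt d Hd).
  destruct (Z.eqb _ 0); auto. f_equal. apply (moebius_fuel_enough (Z.to_nat d)); lia.
Qed.

Lemma moebius_1 : moebius 1 = 1.
Proof. reflexivity. Qed.

Lemma moebius_bound d : -1 <= moebius d <= 1.
Proof.
  unfold moebius. generalize (Z.to_nat d). intros f. revert d.
  induction f; intros d; simpl; [lia |].
  destruct (Z.leb d 1); [lia |]. destruct (Z.eqb _ 0); [lia |].
  specialize (IHf (d / least_factor d)). lia.
Qed.

Lemma Rabs_moebius_le1 d : (Rabs (IZR (moebius d)) <= 1)%R.
Proof.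
  pose proof (moebius_bound d). apply Rabs_le.
  split; [apply (IZR_le (-1)) | apply (IZR_le _ 1)]; lia.
Qed.

Lemma prime_divides_prime s p : prime s -> prime p -> (s | p) -> s = p.
Proof.
  intros Hs Hp H. apply prime_divisors in H; auto.
  pose proof (prime_ge_2 s Hs). pose proof (prime_ge_2 p Hp). lia.
Qed.

Lemma moebius_mul_prime p d : prime p -> 1 <= d -> ~ (p | d) -> moebius (p * d) = - moebius d.
Proof.
  intros Hp Hd0. pose proof (prime_ge_2 p Hp) as Hp2. generalize Hd0.
  apply (Z_lt_induction (fun d => 1 <= d -> ~ (p | d) -> moebius (p * d) = - moebius d)); [| lia].
  clear d Hd0. intros d IH Hd Hnd. set (m := p * d).
  assert (Hm : 2 <= m) by (unfold m; nia).
  pose proof (least_factor_prime m Hm) as Hs. destruct (least_factor_spec m Hm) as [_ [Hsm _]].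
  rewrite (moebius_unfold m Hm).
  destruct (prime_mult _ Hs p d Hsm) as [Hsp | Hsd].
  - apply prime_divides_prime in Hsp; auto. rewrite Hsp. unfold m.
    rewrite Z.mul_comm, Z.div_mul by lia.
    destruct (Z.eqb_spec (d mod p) 0); auto.
    exfalso. apply Hnd. apply Z.mod_divide; auto; lia.
  - assert (Hsnp : least_factor m <> p) by (intro E; rewrite E in Hsd; auto).
    assert (Hd2 : 2 <= d).
    { pose proof (prime_ge_2 _ Hs).
      destruct (Z.eq_dec d 1); [subst; apply Z.divide_pos_le in Hsd; lia | lia]. }
    rewrite (moebius_unfold d Hd2), (least_factor_of_multiple p d) by auto.
    fold m. set (s := least_factor m) in *. pose proof (prime_ge_2 s Hs).
    destruct Hsd as [d' Hd'].
    assert (Em : m / s = p * d') by (unfold m; rewrite Hd', Z.mul_assoc, Z.div_mul; lia).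
    assert (Ed : d / s = d') by (rewrite Hd', Z.div_mul; lia).
    rewrite Em, Ed.
    assert (~ (p | d')) by (intro Hc; apply Hnd; rewrite Hd'; apply Z.divide_mul_l; auto).
    rewrite (IH d') by (auto; nia).
    assert (~ (s | p)) by (intro Hc; apply Hsnp; apply prime_divides_prime; auto).
    destruct (Z.eqb_spec ((p * d') mod s) 0) as [E | E];
      destruct (Z.eqb_spec (d' mod s) 0) as [E' | E']; try lia; exfalso.
    + apply Z.mod_divide, prime_mult in E; [| auto | lia].
      destruct E as [E | E]; auto. apply E'. apply Z.mod_divide; auto; lia.
    + apply E, Z.mod_divide; [lia |]. apply Z.divide_mul_r, Z.mod_divide; auto; lia.
Qed.

Lemma moebius_mul_prime_sq p d : prime p -> 1 <= d -> moebius (p * p * d) = 0.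
Proof.
  intros Hp Hd0. pose proof (prime_ge_2 p Hp) as Hp2. generalize Hd0.
  apply (Z_lt_induction (fun d => 1 <= d -> moebius (p * p * d) = 0)); [| lia].
  clear d Hd0. intros d IH Hd. set (m := p * p * d).
  assert (Hm : 2 <= m) by (unfold m; nia).
  pose proof (least_factor_prime m Hm) as Hs. destruct (least_factor_spec m Hm) as [_ [Hsm _]].
  set (s := least_factor m) in *. pose proof (prime_ge_2 s Hs).
  rewrite (moebius_unfold m Hm). fold s.
  assert (Hsm' : (s | p * (p * d))) by (replace (p * (p * d)) with m by (unfold m; ring); auto).
  destruct (prime_mult _ Hs p (p * d) Hsm') as [Hsp | Hsd];
    [| destruct (prime_mult _ Hs p d Hsd) as [Hsp | [d' Hd']]].
  1, 2: apply prime_divides_prime in Hsp; auto; rewrite Hsp; unfold m;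
    rewrite <- Z.mul_assoc, (Z.mul_comm p (p * d)), Z.div_mul, Z.mul_comm, Z_mod_mult by lia;
    reflexivity.
  destruct (Z.eqb _ 0); auto.
  replace (m / s) with (p * p * d') by (unfold m; rewrite Hd', Z.mul_assoc, Z.div_mul; lia).
  rewrite (IH d'); auto; nia.
Qed.

Close Scope Z_scope.

Definition sum1 (G : Z -> R) (X : nat) : R := sumR (fun i => G (Z.of_nat (S i))) X.

Lemma sum1_ext G H X : (forall d, (1 <= d <= Z.of_nat X)%Z -> G d = H d) -> sum1 G X = sum1 H X.
Proof. intros E. apply sumR_ext. intros i Hi. apply E. lia. Qed.

Lemma sum1_plus G H X : sum1 (fun d => G d + H d) X = sum1 G X + sum1 H X.
Proof. apply sumR_plus. Qed.

Lemma sum1_scal c G X : sum1 (fun d => c * G d) X = c * sum1 G X.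
Proof. apply sumR_scal_l. Qed.

Lemma sum1_opp G X : sum1 (fun d => - G d) X = - sum1 G X.
Proof. unfold sum1. induction X; cbn [sumR]; [lra | rewrite IHX; lra]. Qed.

Lemma sum1_zero G X : (forall d, (1 <= d <= Z.of_nat X)%Z -> G d = 0) -> sum1 G X = 0.
Proof. intros. rewrite (sum1_ext G (fun _ => 0)) by auto. unfold sum1. rewrite sumR_const. lra. Qed.

Lemma sum1_swap (G : Z -> Z -> R) X Y :
  sum1 (fun a => sum1 (G a) Y) X = sum1 (fun b => sum1 (fun a => G a b) X) Y.
Proof. apply (sumR_swap (fun i j => G (Z.of_nat (S i)) (Z.of_nat (S j)))). Qed.

Definition divisible_by (p : nat) (d : Z) : bool := Z.eqb (d mod Z.of_nat p) 0.

Lemma sum1_multiples (p : nat) (H : Z -> R) X : (1 <= p)%nat ->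
  sum1 (fun d => if divisible_by p d then H d else 0) X =
  sum1 (fun e => H (Z.of_nat p * e)%Z) (X / p).
Proof.
  intros Hp. induction X; [rewrite Nat.Div0.div_0_l; reflexivity |].
  unfold sum1 in *. cbn [sumR]. rewrite IHX. unfold divisible_by. rewrite <- Nat2Z.inj_mod.
  pose proof (Nat.div_mod X p ltac:(lia)). pose proof (Nat.mod_upper_bound X p ltac:(lia)).
  pose proof (Nat.div_mod (S X) p ltac:(lia)). pose proof (Nat.mod_upper_bound (S X) p ltac:(lia)).
  destruct (Z.eqb_spec (Z.of_nat (S X mod p)) 0) as [E | E].
  - assert (S X mod p = 0)%nat by lia.
    assert (Eq : (S X / p = S (X / p))%nat) by nia. rewrite Eq in *. cbn [sumR].
    f_equal. f_equal. nia.
  - assert (S X / p = X / p)%nat as -> by nia. lra.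
Qed.

(* The terms cancel in pairs [(d, p d)] with [p] not dividing [d]. *)
Lemma sum1_prime_pairing (p : nat) (G : Z -> R) X : (2 <= p)%nat ->
  (forall d, (1 <= d)%Z -> divisible_by p d = false -> G (Z.of_nat p * d)%Z = - G d) ->
  (forall d, (1 <= d)%Z -> G (Z.of_nat p * Z.of_nat p * d)%Z = 0) ->
  (forall d, (Z.of_nat X < d)%Z -> G d = 0) ->
  sum1 G X = 0.
Proof.
  intros Hp Hflip Hsq Hbig.
  set (Gcop := fun d => if divisible_by p d then 0 else G d).
  set (Gmul := fun d => if divisible_by p d then G d else 0).
  set (Y := (X / p)%nat).
  assert (Esplit : sum1 G X = sum1 Gcop X + sum1 Gmul X).
  { rewrite <- sum1_plus. apply sum1_ext. intros d _. unfold Gcop, Gmul.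
    destruct (divisible_by p d); lra. }
  assert (Emul : sum1 Gmul X = - sum1 Gcop Y).
  { unfold Gmul. rewrite sum1_multiples by lia. fold Y.
    rewrite (sum1_ext _ (fun e => (if divisible_by p e then 0 else G (Z.of_nat p * e)%Z) +
                                   (if divisible_by p e then G (Z.of_nat p * e)%Z else 0)))
      by (intros d _; destruct (divisible_by p d); lra).
    rewrite sum1_plus, sum1_multiples by lia.
    rewrite (sum1_zero (fun e => G (Z.of_nat p * (Z.of_nat p * e))%Z))
      by (intros d Hd; rewrite Z.mul_assoc; apply Hsq; lia).
    rewrite Rplus_0_r, <- sum1_opp. apply sum1_ext. intros d Hd. unfold Gcop.
    destruct (divisible_by p d) eqn:E; [lra |]. rewrite Hflip by (auto; lia). lra. }
  assert (Ecop : sum1 Gcop X = sum1 Gcop Y).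
  { pose proof (Nat.div_mod X p ltac:(lia)) as Hdm. pose proof (Nat.mod_upper_bound X p ltac:(lia)).
    fold Y in Hdm. assert (HY : (Y <= X)%nat) by nia.
    unfold sum1. replace X with (Y + (X - Y))%nat at 1 by lia. rewrite sumR_split.
    rewrite (sumR_ext (fun i => Gcop (Z.of_nat (S (Y + i)))) (fun _ => 0));
      [rewrite sumR_const; lra |].
    intros i Hi. unfold Gcop. destruct (divisible_by p _) eqn:E; auto.
    (* the partner [p d] of an index [d > X / p] lies beyond [X] *)
    rewrite <- (Ropp_involutive (G _)), <- Hflip, Hbig by (auto; nia). lra. }
  rewrite Esplit, Ecop, Emul. lra.
Qed.

Open Scope Z_scope.

Lemma Zpow_ge1 d k : 1 <= d -> 1 <= d ^ Z.of_nat k.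
Proof.
  intros. rewrite <- (Z.pow_1_l (Z.of_nat k)) by lia. apply Z.pow_le_mono_l. lia.
Qed.

Lemma divide_Zpow a b k : (a | b) -> (a ^ Z.of_nat k | b ^ Z.of_nat k).
Proof. intros [c ->]. rewrite Z.pow_mul_l. apply Z.divide_mul_r, Z.divide_refl. Qed.

Lemma rel_prime_Zpow a b k : rel_prime a b -> rel_prime (a ^ Z.of_nat k) b.
Proof.
  intros H. induction k; [apply rel_prime_1 |].
  rewrite Nat2Z.inj_succ, Z.pow_succ_r by lia.
  apply rel_prime_sym, rel_prime_mult; apply rel_prime_sym; auto.
Qed.

Lemma rel_prime_divide_mul a b n : rel_prime a b -> (a | n) -> (b | n) -> (a * b | n).
Proof.
  intros H [x Hx] Hb. rewrite Hx, Z.mul_comm in Hb.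
  apply Gauss in Hb; [| now apply rel_prime_sym].
  destruct Hb as [y Hy]. exists y. rewrite Hx, Hy. ring.
Qed.

Lemma mod_eqb0_divide n x : 0 < x -> Z.eqb (n mod x) 0 = true <-> (x | n).
Proof. intros. rewrite Z.eqb_eq. apply Z.mod_divide. lia. Qed.

(* [moebius_kdiv k n d] is the term of [sum_(d^k | n) moebius d], the k-free indicator of [n]. *)
Definition moebius_kdiv (k : nat) (n d : Z) : Z :=
  if Z.eqb (n mod d ^ Z.of_nat k) 0 then moebius d else 0.

Close Scope Z_scope.

Lemma sum_moebius_kdiv_kfree k n X : (1 <= k)%nat -> (1 <= n <= Z.of_nat X)%Z ->
  kfree k n -> sum1 (fun d => IZR (moebius_kdiv k n d)) X = 1.
Proof.
  intros Hk Hn Hf. destruct X as [| X]; [lia |].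
  unfold sum1. rewrite sumR_shift, (sumR_ext _ (fun _ => 0)), sumR_const.
  - unfold moebius_kdiv. simpl Z.of_nat.
    rewrite Z.pow_1_l, Z.mod_1_r, moebius_1 by lia. simpl. lra.
  - intros i Hi. unfold moebius_kdiv.
    destruct (Z.eqb_spec (n mod Z.of_nat (S (S i)) ^ Z.of_nat k) 0) as [E | E]; auto.
    exfalso. set (d := Z.of_nat (S (S i))) in *. assert (Hd : (2 <= d)%Z) by (unfold d; lia).
    apply Z.mod_divide in E; [| pose proof (Zpow_ge1 d k ltac:(lia)); lia].
    apply (Hf (least_factor d) (least_factor_prime d Hd)).
    eapply Z.divide_trans; [| apply E]. apply divide_Zpow, least_factor_spec; auto.
Qed.

Lemma sum_moebius_kdiv_not_kfree k n X : (1 <= k)%nat -> (1 <= n <= Z.of_nat X)%Z ->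
  ~ kfree k n -> sum1 (fun d => IZR (moebius_kdiv k n d)) X = 0.
Proof.
  intros Hk Hn Hnf. unfold kfree in Hnf.
  apply not_all_ex_not in Hnf as [p Hnf]. apply imply_to_and in Hnf as [Hp Hpk].
  apply NNPP in Hpk. pose proof (prime_ge_2 p Hp) as Hp2.
  assert (Ep : p = Z.of_nat (Z.to_nat p)) by lia.
  apply (sum1_prime_pairing (Z.to_nat p)); [lia | | |]; try rewrite <- Ep.
  - intros d Hd Hnd. unfold moebius_kdiv.
    assert (Hpd : ~ (p | d)%Z).
    { intro Hc. apply (mod_eqb0_divide d p) in Hc; [| lia].
      unfold divisible_by in Hnd. rewrite <- Ep in Hnd. congruence. }
    rewrite moebius_mul_prime by auto.
    assert (Hpdk : (0 < (p * d) ^ Z.of_nat k)%Z) by (apply Z.pow_pos_nonneg; lia).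
    assert (Hdk : (0 < d ^ Z.of_nat k)%Z) by (apply Z.pow_pos_nonneg; lia).
    destruct (Z.eqb (n mod (p * d) ^ Z.of_nat k) 0) eqn:E1;
      destruct (Z.eqb (n mod d ^ Z.of_nat k) 0) eqn:E2;
      try (rewrite opp_IZR; reflexivity); try (simpl; lra); exfalso.
    + apply mod_eqb0_divide in E1; auto.
      enough (Z.eqb (n mod d ^ Z.of_nat k) 0 = true) by congruence.
      apply mod_eqb0_divide; auto. eapply Z.divide_trans; [| apply E1].
      rewrite Z.pow_mul_l. apply Z.divide_mul_r, Z.divide_refl.
    + apply mod_eqb0_divide in E2; auto.
      enough (Z.eqb (n mod (p * d) ^ Z.of_nat k) 0 = true) by congruence.
      apply mod_eqb0_divide; auto. rewrite Z.pow_mul_l. apply rel_prime_divide_mul; auto.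
      apply rel_prime_Zpow, rel_prime_sym, rel_prime_Zpow, rel_prime_sym, prime_rel_prime; auto.
  - intros d Hd. unfold moebius_kdiv. rewrite moebius_mul_prime_sq by auto.
    destruct (Z.eqb _ 0); auto.
  - intros d Hd. unfold moebius_kdiv.
    destruct (Z.eqb_spec (n mod d ^ Z.of_nat k) 0) as [E | E]; auto. exfalso.
    assert (d <= d ^ Z.of_nat k)%Z.
    { rewrite <- (Z.pow_1_r d) at 1. apply Z.pow_le_mono_r; lia. }
    apply Z.mod_divide, Z.divide_pos_le in E; lia.
Qed.

Lemma sum_moebius_kdiv k n X : (1 <= k)%nat -> (1 <= n <= Z.of_nat X)%Z ->
  sum1 (fun d => IZR (moebius_kdiv k n d)) X = INR (indic (kfree k n)).
Proof.
  intros Hk Hn. unfold indic. destruct (excluded_middle_informative _).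
  - now apply sum_moebius_kdiv_kfree.
  - now apply sum_moebius_kdiv_not_kfree.
Qed.

Lemma kfree_1_iff n : (1 <= n)%Z -> kfree 1 n <-> n = 1%Z.
Proof.
  intros Hn. change (Z.of_nat 1) with 1%Z. unfold kfree. setoid_rewrite Z.pow_1_r. split.
  - intros Hf. destruct (Z.eq_dec n 1); auto. exfalso.
    apply (Hf (least_factor n) (least_factor_prime n ltac:(lia))), least_factor_spec. lia.
  - intros -> p Hp H. apply Z.divide_pos_le in H; [| lia]. pose proof (prime_ge_2 p Hp). lia.
Qed.

(** * The zeta function and the Moebius series *)

Definition zeta_term (k i : nat) : R := / INR (i + 1) ^ k.

Lemma zeta_term_pos k i : 0 < zeta_term k i.
Proof. apply Rinv_0_lt_compat, pow_lt, lt_0_INR. lia. Qed.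

Lemma zeta_term_le k i : (2 <= k)%nat -> zeta_term k i <= zeta_term 2 i.
Proof.
  intros Hk. unfold zeta_term.
  assert (1 <= INR (i + 1)) by (apply (le_INR 1); lia).
  apply Rinv_le_contravar; [apply pow_lt; lra | apply Rle_pow; auto].
Qed.

(* Telescoping against [1/n - 1/(n+1) = 1/(n(n+1)) >= 1/(n+1)^2]. *)
Lemma zeta_tail_le k Y m : (2 <= k)%nat -> (1 <= Y)%nat ->
  sumR (fun i => zeta_term k (Y + i)) m <= / INR Y - / INR (Y + m).
Proof.
  intros Hk HY. induction m; [rewrite Nat.add_0_r; simpl; lra |].
  cbn [sumR]. pose proof (zeta_term_le k (Y + m) Hk). unfold zeta_term in *.
  set (n := INR (Y + m)).
  assert (1 <= n) by (apply (le_INR 1); lia).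
  replace (INR (Y + m + 1)) with (n + 1) in *
    by (unfold n; rewrite (plus_INR (Y + m) 1), INR_1; lra).
  replace (INR (Y + S m)) with (n + 1) by (unfold n; rewrite Nat.add_succ_r, S_INR; lra).
  assert (/ (n + 1) ^ 2 <= / n - / (n + 1)).
  { replace (/ n - / (n + 1)) with (/ (n * (n + 1))) by (field; lra).
    apply Rinv_le_contravar; nra. }
  fold n in IHm. lra.
Qed.

Lemma zeta_partial_le k Y n : (2 <= k)%nat -> (1 <= Y)%nat ->
  sumR (zeta_term k) n <= sumR (zeta_term k) Y + / INR Y.
Proof.
  intros Hk HY.
  destruct (le_lt_dec n Y).
  - replace Y with (n + (Y - n))%nat by lia. rewrite sumR_split.
    assert (0 <= sumR (fun i => zeta_term k (n + i)) (Y - n))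
      by (apply sumR_nonneg; intros; left; apply zeta_term_pos).
    assert (0 < / INR (n + (Y - n))) by (apply Rinv_0_lt_compat, lt_0_INR; lia). lra.
  - replace n with (Y + (n - Y))%nat by lia. rewrite sumR_split.
    pose proof (zeta_tail_le k Y (n - Y) Hk HY).
    assert (0 < / INR (Y + (n - Y))) by (apply Rinv_0_lt_compat, lt_0_INR; lia). lra.
Qed.

Lemma sum_n_sumR (a : nat -> R) n : sum_n a n = sumR a (S n).
Proof. induction n; [rewrite sum_O; simpl; lra | rewrite sum_Sn, IHn; reflexivity]. Qed.

Lemma zeta_nat_bounds k Y : (2 <= k)%nat -> (1 <= Y)%nat ->
  sumR (zeta_term k) Y <= zeta_nat k <= sumR (zeta_term k) Y + / INR Y.
Proof.
  intros Hk HY.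
  assert (Hinc : forall n, sum_n (zeta_term k) n <= sum_n (zeta_term k) (S n)).
  { intros n. rewrite !sum_n_sumR. cbn [sumR]. pose proof (zeta_term_pos k (S n)). lra. }
  destruct (ex_finite_lim_seq_incr (sum_n (zeta_term k)) (sumR (zeta_term k) 1 + / INR 1) Hinc)
    as [l Hl].
  { intros n. rewrite sum_n_sumR. apply zeta_partial_le; lia. }
  replace (zeta_nat k) with l.
  2:{ unfold zeta_nat, Series. change (fun n => / INR (n + 1) ^ k) with (zeta_term k).
      now rewrite (is_lim_seq_unique _ _ Hl). }
  split.
  - pose proof (is_lim_seq_incr_compare _ _ Hl Hinc (Y - 1)) as H.
    rewrite sum_n_sumR in H. now replace (S (Y - 1)) with Y in H by lia.
  - change (Rbar_le l (sumR (zeta_term k) Y + / INR Y)).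
    apply (is_lim_seq_le (sum_n (zeta_term k)) (fun _ => sumR (zeta_term k) Y + / INR Y));
      auto using is_lim_seq_const.
    intros n. rewrite sum_n_sumR. apply zeta_partial_le; lia.
Qed.

Lemma zeta_nat_ge1 k : (2 <= k)%nat -> 1 <= zeta_nat k.
Proof.
  intros Hk. destruct (zeta_nat_bounds k 1 Hk ltac:(lia)) as [H _].
  unfold zeta_term in H. simpl in H. rewrite pow1, Rinv_1 in H. lra.
Qed.

Lemma sum1_inv_pow_kfree1 k X : (1 <= X)%nat ->
  sum1 (fun n => / IZR n ^ k * INR (indic (kfree 1 n))) X = 1.
Proof.
  intros HX. destruct X as [| X]; [lia |]. unfold sum1.
  rewrite sumR_shift, (sumR_ext _ (fun _ => 0)), sumR_const.
  - unfold indic. destruct (excluded_middle_informative _) as [_ | Hn].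
    + simpl. rewrite pow1. lra.
    + exfalso. apply Hn, kfree_1_iff; reflexivity || lia.
  - intros i _. unfold indic. destruct (excluded_middle_informative _) as [Hf | _]; [| simpl; lra].
    apply kfree_1_iff in Hf; lia.
Qed.

(* Moebius inversion [sum_(d | n) moebius d = [n = 1]], weighted by [n^-k] and regrouped
   along [n = d e]. *)
Lemma moebius_zeta_convolution k X : (1 <= X)%nat ->
  sum1 (fun d => IZR (moebius d) / IZR d ^ k * sumR (zeta_term k) (X / Z.to_nat d)) X = 1.
Proof.
  intros HX. rewrite <- (sum1_inv_pow_kfree1 k X HX).
  rewrite (sum1_ext (fun n => / IZR n ^ k * INR (indic (kfree 1 n)))
             (fun n => sum1 (fun d => / IZR n ^ k * IZR (moebius_kdiv 1 n d)) X))
    by (intros n Hn; rewrite sum1_scal, sum_moebius_kdiv; auto).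
  rewrite sum1_swap. apply sum1_ext. intros d Hd.
  rewrite (sum1_ext _ (fun n => if divisible_by (Z.to_nat d) n
                                then IZR (moebius d) / IZR n ^ k else 0)).
  2:{ intros n Hn. unfold moebius_kdiv, divisible_by. change (Z.of_nat 1) with 1%Z.
      rewrite Z.pow_1_r, Z2Nat.id by lia. destruct (Z.eqb _ 0); simpl; lra. }
  rewrite sum1_multiples by lia.
  replace (sumR (zeta_term k) (X / Z.to_nat d)) with (sum1 (fun e => / IZR e ^ k) (X / Z.to_nat d))
    by (apply sumR_ext; intros i _; unfold zeta_term; rewrite <- INR_IZR_INZ; do 3 f_equal; lia).
  rewrite <- sum1_scal. apply sum1_ext. intros e He.
  rewrite Z2Nat.id, mult_IZR, Rpow_mult_distr by lia.
  assert (0 < IZR d) by (apply IZR_lt; lia). assert (0 < IZR e) by (apply IZR_lt; lia).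
  field. split; apply pow_nonzero; lra.
Qed.

Lemma moebius_term_bound k (d : nat) : (2 <= k)%nat -> (1 <= d)%nat ->
  Rabs (IZR (moebius (Z.of_nat d)) / IZR (Z.of_nat d) ^ k) <= zeta_term 2 (d - 1).
Proof.
  intros Hk Hd. rewrite <- INR_IZR_INZ.
  eapply Rle_trans; [| apply (zeta_term_le k); auto]. unfold zeta_term.
  replace (d - 1 + 1)%nat with d by lia.
  assert (1 <= INR d) by (apply (le_INR 1); lia).
  pose proof (Rabs_moebius_le1 (Z.of_nat d)).
  unfold Rdiv. rewrite Rabs_mult, Rabs_inv, (Rabs_right (INR d ^ k)) by (apply Rle_ge, pow_le; lra).
  assert (0 < / INR d ^ k) by (apply Rinv_0_lt_compat, pow_lt; lra).
  pose proof (Rabs_pos (IZR (moebius (Z.of_nat d)))). nra.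
Qed.

(* Weights at most [1/r] on the first [r] indices and at most [1] beyond, against the
   summable [1/(i+1)^2]. *)
Lemma weighted_zeta2_sum_le (r : nat) (w : nat -> R) : (1 <= r)%nat ->
  (forall i, (i < r * r)%nat -> 0 <= w i <= / INR ((r * r) / S i)) ->
  sumR (fun i => zeta_term 2 i * w i) (r * r) <= 3 / INR r.
Proof.
  intros Hr Hw. set (X := (r * r)%nat) in *.
  assert (Hr' : 1 <= INR r) by (apply (le_INR 1); lia).
  replace X with (r + (X - r))%nat at 1 by (unfold X; nia). rewrite sumR_split.
  assert (Hhead : sumR (fun i => zeta_term 2 i * w i) r <= 2 / INR r).
  { apply Rle_trans with (sumR (fun i => zeta_term 2 i * / INR r) r).
    - apply sumR_le. intros i Hi. destruct (Hw i ltac:(unfold X; nia)).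
      assert (INR r <= INR (X / S i))
        by (apply le_INR, Nat.div_le_lower_bound; unfold X; nia).
      assert (/ INR (X / S i) <= / INR r) by (apply Rinv_le_contravar; lra).
      pose proof (zeta_term_pos 2 i). apply Rmult_le_compat_l; lra.
    - rewrite sumR_scal_r. pose proof (zeta_partial_le 2 1 r ltac:(lia) ltac:(lia)) as H.
      unfold zeta_term at 2 in H. simpl in H.
      assert (0 < / INR r) by (apply Rinv_0_lt_compat; lra). unfold Rdiv. nra. }
  assert (Htail : sumR (fun i => zeta_term 2 (r + i) * w (r + i)%nat) (X - r) <= / INR r).
  { apply Rle_trans with (sumR (fun i => zeta_term 2 (r + i)) (X - r)).
    - apply sumR_le. intros i Hi. destruct (Hw (r + i)%nat ltac:(lia)).
      assert (1 <= INR (X / S (r + i)))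
        by (apply (le_INR 1), Nat.div_le_lower_bound; unfold X; nia).
      assert (/ INR (X / S (r + i)) <= 1) by (rewrite <- Rinv_1; apply Rinv_le_contravar; lra).
      pose proof (zeta_term_pos 2 (r + i)). nra.
    - pose proof (zeta_tail_le 2 r (X - r) ltac:(lia) Hr).
      assert (0 < / INR (r + (X - r))) by (apply Rinv_0_lt_compat, lt_0_INR; lia). lra. }
  unfold Rdiv in *. lra.
Qed.

Lemma moebius_sum_approx k (r : nat) : (2 <= k)%nat -> (1 <= r)%nat ->
  Rabs (sum1 (fun d => IZR (moebius d) / IZR d ^ k) (r * r) - / zeta_nat k) <= 3 / INR r.
Proof.
  intros Hk Hr. set (X := (r * r)%nat). set (z := zeta_nat k).
  set (c := fun d => IZR (moebius d) / IZR d ^ k).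
  assert (Hz : 1 <= z) by (apply zeta_nat_ge1; auto).
  assert (Edefect : sum1 c X * z - 1 =
                    sum1 (fun d => c d * (z - sumR (zeta_term k) (X / Z.to_nat d))) X).
  { rewrite <- (moebius_zeta_convolution k X) by (unfold X; nia).
    unfold sum1. rewrite <- sumR_scal_r, <- sumR_minus. apply sumR_ext. intros. unfold c. lra. }
  assert (Hdefect : Rabs (sum1 c X * z - 1) <= 3 / INR r).
  { rewrite Edefect. eapply Rle_trans; [apply sumR_abs |].
    eapply Rle_trans; [| apply (weighted_zeta2_sum_le r
                          (fun i => z - sumR (zeta_term k) (X / S i)) Hr)].
    - apply sumR_le. intros i Hi. rewrite Rabs_mult, Nat2Z.id.
      pose proof (moebius_term_bound k (S i) Hk ltac:(lia)) as Hc.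
      replace (S i - 1)%nat with i in Hc by lia.
      assert (1 <= X / S i)%nat by (apply Nat.div_le_lower_bound; lia).
      destruct (zeta_nat_bounds k (X / S i) Hk ltac:(lia)) as [Hlo Hhi]. fold z in Hlo, Hhi.
      rewrite (Rabs_right (z - _)) by lra.
      apply Rmult_le_compat_r; [lra | exact Hc].
    - intros i Hi. change (r * r)%nat with X in Hi |- *.
      assert (1 <= X / S i)%nat by (apply Nat.div_le_lower_bound; lia).
      destruct (zeta_nat_bounds k (X / S i) Hk ltac:(lia)) as [Hlo Hhi]. fold z in Hlo, Hhi. lra. }
  replace (sum1 c X - / z) with ((sum1 c X * z - 1) / z) by (field; lra).
  unfold Rdiv at 1. rewrite Rabs_mult, Rabs_inv, (Rabs_right z) by lra.
  assert (/ z <= 1) by (rewrite <- Rinv_1; apply Rinv_le_contravar; lra).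
  assert (0 < / z) by (apply Rinv_0_lt_compat; lra).
  pose proof (Rabs_pos (sum1 c X * z - 1)). nra.
Qed.

(** * The main estimate *)

Lemma beatty_length_le alpha beta N : alpha > 1 -> (1 <= N)%nat ->
  INR (beatty_length alpha beta N) <= 2 * INR N.
Proof.
  intros Halpha HN. pose proof (beatty_length_approx alpha beta Halpha N) as H.
  apply Rabs_le_between in H. assert (1 <= INR N) by (apply (le_INR 1); lia).
  assert (INR N / alpha <= INR N) by (apply Rle_div_l; nra). lra.
Qed.

Lemma count_kfree_beatty_moebius alpha beta k N : alpha > 1 -> (1 <= k)%nat ->
  INR (count_kfree_beatty alpha beta k N) =
  sumR (fun i => IZR (moebius (Z.of_nat (S i))) * beatty_multiples alpha beta (S i ^ k) N) (N * N).
Proof.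
  intros Halpha Hk. unfold count_kfree_beatty.
  rewrite (count_beatty_reindex alpha beta Halpha (kfree k)).
  rewrite (sumR_ext _ (fun j =>
             sum1 (fun d => IZR (moebius_kdiv k (beatty_at alpha beta j) d)) (N * N))).
  2:{ intros j Hj. pose proof (beatty_at_range alpha beta Halpha N j Hj).
      rewrite sum_moebius_kdiv; auto. rewrite Nat2Z.inj_mul. nia. }
  unfold sum1.
  rewrite (sumR_swap (fun j i => IZR (moebius_kdiv k (beatty_at alpha beta j) (Z.of_nat (S i))))).
  apply sumR_ext. intros i _. unfold beatty_multiples. rewrite <- sumR_scal_l.
  apply sumR_ext. intros j _. unfold moebius_kdiv, divides_ind.
  rewrite Nat2Z.inj_pow. destruct (Z.eqb _ 0); lra.
Qed.

Lemma sumR_indicator_lt (Q X : nat) c :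
  sumR (fun i => if Nat.ltb i Q then c else 0) X = INR (Nat.min X Q) * c.
Proof.
  induction X; [simpl; lra |]. cbn [sumR]. rewrite IHX.
  destruct (Nat.ltb_spec X Q).
  - replace (Nat.min (S X) Q) with (S (Nat.min X Q)) by lia. rewrite S_INR. lra.
  - replace (Nat.min (S X) Q) with (Nat.min X Q) by lia. lra.
Qed.

(* Below [Q = P^2] each term is [< 1/Q^2]; from [Q] on, compare with [1/(i+1)^2]. *)
Lemma sum_inv_pow_above_le k (P X : nat) : (2 <= k)%nat -> (1 <= P)%nat ->
  sumR (fun i => if Nat.ltb (P ^ 4) (S i ^ k) then / INR (S i ^ k) else 0) X
  <= 2 / INR (P * P).
Proof.
  intros Hk HP. set (Q := (P * P)%nat).
  assert (HQ : 1 <= INR Q) by (apply (le_INR 1); unfold Q; nia).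
  assert (HQQ : 0 < / INR (Q * Q)) by (apply Rinv_0_lt_compat, lt_0_INR; unfold Q; nia).
  set (g := fun i => if Nat.ltb i Q then / INR (Q * Q) else zeta_term 2 i).
  assert (Hg : forall i, 0 <= g i)
    by (intros i; unfold g; destruct (Nat.ltb _ _); [lra | left; apply zeta_term_pos]).
  apply Rle_trans with (sumR g (X + Q)).
  { rewrite sumR_split. pose proof (sumR_nonneg (fun i => g (X + i)%nat) Q (fun i _ => Hg _)).
    enough (sumR (fun i => if Nat.ltb (P ^ 4) (S i ^ k) then / INR (S i ^ k) else 0) X
            <= sumR g X) by lra.
    apply sumR_le. intros i _. unfold g.
    destruct (Nat.ltb_spec (P ^ 4) (S i ^ k)) as [L | L]; [| apply Hg].
    assert (Hq : 0 < INR (S i ^ k)) by (apply lt_0_INR, Nat.neq_0_lt_0, Nat.pow_nonzero; lia).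
    destruct (Nat.ltb_spec i Q).
    - apply Rinv_le_contravar; [apply lt_0_INR; unfold Q; nia | apply le_INR].
      replace (Q * Q)%nat with (P ^ 4)%nat by (unfold Q; simpl; ring). lia.
    - replace (/ INR (S i ^ k)) with (zeta_term k i)
        by (unfold zeta_term; rewrite pow_INR; do 3 f_equal; lia).
      apply (zeta_term_le k i Hk). }
  rewrite Nat.add_comm, sumR_split.
  rewrite (sumR_ext g (fun _ => / INR (Q * Q)))
    by (intros i Hi; unfold g; destruct (Nat.ltb_spec i Q); lia || auto).
  rewrite (sumR_ext (fun i => g (Q + i)%nat) (fun i => zeta_term 2 (Q + i)))
    by (intros i Hi; unfold g; destruct (Nat.ltb_spec (Q + i) Q); lia || auto).
  rewrite sumR_const. pose proof (zeta_tail_le 2 Q X ltac:(lia) ltac:(unfold Q; nia)).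
  assert (0 < / INR (Q + X)) by (apply Rinv_0_lt_compat, lt_0_INR; unfold Q; nia).
  rewrite mult_INR. replace (INR Q * / (INR Q * INR Q)) with (/ INR Q) by (field; lra).
  unfold Rdiv. lra.
Qed.

Section MoebiusErrorTerm.
Variables (alpha beta c0 : R) (T k N P : nat).
Hypotheses (Halpha : alpha > 1) (Hc0 : 0 < c0)
  (Hdioph : forall n : nat, (1 <= n)%nat -> c0 / INR n ^ T <= dist_nint (alpha * INR n))
  (Hk : (2 <= k)%nat) (HP : (1 <= P)%nat) (HPN : (P ^ (4 * T + 8) <= N)%nat).

(* Divisors [d] with [d^k <= P^4] use the Diophantine discrepancy at scale [Y = P^4];
   larger ones only the trivial bound [N / d^k]. *)
Definition small_divisor_error : R :=
  3 * INR (beatty_length alpha beta N) / INR (P ^ 4) + INR (P ^ 4) * INR (P ^ 4) ^ T / c0 + 1.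

Lemma small_divisor_error_nonneg : 0 <= small_divisor_error.
Proof.
  unfold small_divisor_error.
  assert (0 < INR (P ^ 4)) by (apply lt_0_INR, Nat.neq_0_lt_0, Nat.pow_nonzero; lia).
  assert (0 <= 3 * INR (beatty_length alpha beta N) / INR (P ^ 4))
    by (apply Rdiv_le_0_compat; [pose proof (pos_INR (beatty_length alpha beta N)); lra | lra]).
  assert (0 <= INR (P ^ 4) * INR (P ^ 4) ^ T / c0)
    by (apply Rdiv_le_0_compat; [apply Rmult_le_pos; [lra | apply pow_le; lra] | lra]).
  lra.
Qed.

Lemma N_ge1 : (1 <= N)%nat.
Proof. pose proof (Nat.pow_le_mono_l 1 P (4 * T + 8) HP). rewrite Nat.pow_1_l in H. lia. Qed.

Lemma moebius_error_term_le i :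
  Rabs (IZR (moebius (Z.of_nat (S i))) *
        (beatty_multiples alpha beta (S i ^ k) N -
         INR (beatty_length alpha beta N) / INR (S i ^ k)))
  <= (if Nat.ltb i (P * P) then small_divisor_error else 0) +
     (if Nat.ltb (P ^ 4) (S i ^ k) then 3 * INR N / INR (S i ^ k) else 0).
Proof.
  set (M := INR (beatty_length alpha beta N)).
  assert (HM : M <= 2 * INR N) by (apply beatty_length_le; auto using N_ge1).
  assert (Hq : (1 <= S i ^ k)%nat) by (apply Nat.neq_0_lt_0, Nat.pow_nonzero; lia).
  assert (Hq' : 0 < INR (S i ^ k)) by (apply lt_0_INR; lia).
  pose proof small_divisor_error_nonneg as Herr.
  rewrite Rabs_mult.
  pose proof (Rabs_moebius_le1 (Z.of_nat (S i))).
  pose proof (Rabs_pos (IZR (moebius (Z.of_nat (S i))))).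
  destruct (Nat.ltb_spec (P ^ 4) (S i ^ k)) as [L | L].
  - pose proof (beatty_multiples_trivial_error alpha beta Halpha (S i ^ k) N Hq) as Htriv.
    fold M in Htriv.
    assert (M / INR (S i ^ k) <= 2 * INR N / INR (S i ^ k))
      by (apply Rmult_le_compat_r; [apply Rlt_le, Rinv_0_lt_compat |]; lra).
    pose proof (Rabs_pos (beatty_multiples alpha beta (S i ^ k) N - M / INR (S i ^ k))).
    destruct (Nat.ltb i (P * P)); unfold Rdiv in *; nra.
  - assert (HiQ : (i < P * P)%nat).
    { assert (S i ^ 2 <= S i ^ k)%nat by (apply Nat.pow_le_mono_r; lia).
      assert (S i * S i <= P * P * (P * P))%nat by (simpl in *; nia). nia. }
    apply Nat.ltb_lt in HiQ. rewrite HiQ, Rplus_0_r.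
    pose proof (beatty_multiples_discrepancy alpha beta c0 T (S i ^ k) (P ^ 4) N
                  Hc0 Hq ltac:(apply Nat.neq_0_lt_0, Nat.pow_nonzero; lia) Hdioph) as Hdisc.
    fold M in Hdisc.
    assert (INR (S i ^ k) * INR (P ^ 4) ^ T / c0 <= INR (P ^ 4) * INR (P ^ 4) ^ T / c0).
    { apply Rmult_le_compat_r; [apply Rlt_le, Rinv_0_lt_compat; lra |].
      apply Rmult_le_compat_r; [apply pow_le, pos_INR | apply le_INR; lia]. }
    assert (Rabs (beatty_multiples alpha beta (S i ^ k) N - M / INR (S i ^ k))
            <= small_divisor_error) by (unfold small_divisor_error; fold M; lra).
    pose proof (Rabs_pos (beatty_multiples alpha beta (S i ^ k) N - M / INR (S i ^ k))). nra.
Qed.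

(* Here [P^(4T+8) <= N] is used: it makes the [P^2] small-divisor errors [O(N / P^2)]. *)
Lemma small_divisor_errors_le :
  INR (P * P) * small_divisor_error <= (7 + / c0) * INR N / INR (P * P).
Proof.
  set (M := INR (beatty_length alpha beta N)).
  assert (HM : M <= 2 * INR N) by (apply beatty_length_le; auto using N_ge1).
  set (Q := INR (P * P)).
  assert (HQ : 1 <= Q) by (apply (le_INR 1); nia).
  assert (EY : INR (P ^ 4) = Q * Q) by (unfold Q; rewrite <- mult_INR; f_equal; simpl; ring).
  assert (Hpow : Q * (INR (P ^ 4) * INR (P ^ 4) ^ T) <= INR N / Q).
  { apply (Rle_div_r _ _ Q); [lra |]. unfold Q. rewrite <- pow_INR, <- !mult_INR. apply le_INR.
    replace (P * P * (P ^ 4 * (P ^ 4) ^ T) * (P * P))%nat with (P ^ (4 * T + 8))%nat; auto.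
    rewrite <- Nat.pow_mul_r, !Nat.pow_add_r. simpl. ring. }
  assert (HQN : Q <= INR N / Q).
  { apply Rle_div_r; [lra |]. unfold Q. rewrite <- mult_INR. apply le_INR.
    assert (P ^ 4 <= P ^ (4 * T + 8))%nat by (apply Nat.pow_le_mono_r; lia).
    replace (P * P * (P * P))%nat with (P ^ 4)%nat by (simpl; ring). lia. }
  assert (HMY : Q * (3 * M / INR (P ^ 4)) <= 6 * INR N / Q).
  { rewrite EY. unfold Rdiv.
    replace (Q * (3 * M * / (Q * Q))) with (3 * M * / Q) by (field; lra).
    apply Rmult_le_compat_r; [apply Rlt_le, Rinv_0_lt_compat |]; lra. }
  assert (Q * (INR (P ^ 4) * INR (P ^ 4) ^ T / c0) <= INR N / Q * / c0).
  { unfold Rdiv at 1. rewrite <- Rmult_assoc.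
    apply Rmult_le_compat_r; [apply Rlt_le, Rinv_0_lt_compat |]; auto. }
  unfold small_divisor_error. fold M. unfold Rdiv in *. lra.
Qed.

Lemma moebius_error_sum_le :
  Rabs (sumR (fun i => IZR (moebius (Z.of_nat (S i))) *
                       (beatty_multiples alpha beta (S i ^ k) N -
                        INR (beatty_length alpha beta N) / INR (S i ^ k))) (N * N))
  <= (13 + / c0) * INR N / INR (P * P).
Proof.
  eapply Rle_trans; [apply sumR_abs |].
  eapply Rle_trans; [apply sumR_le; intros i _; apply moebius_error_term_le |].
  rewrite sumR_plus, sumR_indicator_lt.
  rewrite (sumR_ext _ (fun i =>
             3 * INR N * (if Nat.ltb (P ^ 4) (S i ^ k) then / INR (S i ^ k) else 0)))
    by (intros i _; destruct (Nat.ltb _ _); unfold Rdiv; lra).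
  rewrite sumR_scal_l.
  pose proof (sum_inv_pow_above_le k P (N * N) Hk HP).
  pose proof small_divisor_errors_le. pose proof small_divisor_error_nonneg.
  assert (INR (Nat.min (N * N) (P * P)) <= INR (P * P)) by (apply le_INR; lia).
  assert (INR (Nat.min (N * N) (P * P)) * small_divisor_error <= INR (P * P) * small_divisor_error)
    by (apply Rmult_le_compat_r; auto).
  assert (3 * INR N *
          sumR (fun i => if Nat.ltb (P ^ 4) (S i ^ k) then / INR (S i ^ k) else 0) (N * N)
          <= 3 * INR N * (2 / INR (P * P)))
    by (apply Rmult_le_compat_l; [pose proof (pos_INR N); lra | auto]).
  unfold Rdiv in *. lra.
Qed.

End MoebiusErrorTerm.

Lemma count_kfree_beatty_error alpha beta c0 (T k N P : nat) :
  alpha > 1 -> 0 < c0 ->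
  (forall n : nat, (1 <= n)%nat -> c0 / INR n ^ T <= dist_nint (alpha * INR n)) ->
  (2 <= k)%nat -> (1 <= P)%nat -> (P ^ (4 * T + 8) <= N)%nat ->
  Rabs (INR (count_kfree_beatty alpha beta k N) - / alpha * / zeta_nat k * INR N)
  <= (13 + / c0) * INR N / INR (P * P) + 7.
Proof.
  intros Halpha Hc0 Hdioph Hk HP HPN.
  assert (HN : (1 <= N)%nat) by (eapply N_ge1; eauto).
  set (M := INR (beatty_length alpha beta N)). set (z := zeta_nat k).
  set (Smu := sum1 (fun d => IZR (moebius d) / IZR d ^ k) (N * N)).
  set (err := sumR (fun i => IZR (moebius (Z.of_nat (S i))) *
                       (beatty_multiples alpha beta (S i ^ k) N - M / INR (S i ^ k))) (N * N)).
  assert (Hz : 1 <= z) by (apply zeta_nat_ge1; auto).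
  assert (Hsplit : INR (count_kfree_beatty alpha beta k N) - / alpha * / z * INR N
                   = err + M * (Smu - / z) + (M - INR N / alpha) * / z).
  { rewrite count_kfree_beatty_moebius by (auto; lia).
    assert (err = sumR (fun i => IZR (moebius (Z.of_nat (S i))) *
                                 beatty_multiples alpha beta (S i ^ k) N)
                    (N * N) - M * Smu) as ->.
    { unfold err, Smu, sum1. rewrite <- sumR_scal_l, <- sumR_minus. apply sumR_ext. intros i _.
      rewrite pow_INR, INR_IZR_INZ. unfold Rdiv. ring. }
    field. split; lra. }
  rewrite Hsplit.
  pose proof (moebius_error_sum_le alpha beta c0 T k N P Halpha Hc0 Hdioph Hk HP HPN) as Herr.
  fold M err in Herr.
  assert (HN1 : 1 <= INR N) by (apply (le_INR 1); lia).
  assert (Hmain : Rabs (M * (Smu - / z)) <= 6).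
  { pose proof (moebius_sum_approx k N Hk HN) as HS. fold z Smu in HS.
    pose proof (beatty_length_le alpha beta N Halpha HN). fold M in H.
    rewrite Rabs_mult, (Rabs_right M) by (apply Rle_ge, pos_INR).
    apply Rle_trans with (2 * INR N * (3 / INR N)).
    { apply Rmult_le_compat; [apply pos_INR | apply Rabs_pos | lra | lra]. }
    right. field. lra. }
  assert (Hlen : Rabs ((M - INR N / alpha) * / z) <= 1).
  { pose proof (beatty_length_approx alpha beta Halpha N) as HM. fold M in HM.
    rewrite Rabs_mult, (Rabs_right (/ z)) by (apply Rle_ge, Rlt_le, Rinv_0_lt_compat; lra).
    assert (/ z <= 1) by (rewrite <- Rinv_1; apply Rinv_le_contravar; lra).
    assert (0 < / z) by (apply Rinv_0_lt_compat; lra).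
    pose proof (Rabs_pos (M - INR N / alpha)). nra. }
  pose proof (Rabs_triang (err + M * (Smu - / z)) ((M - INR N / alpha) * / z)).
  pose proof (Rabs_triang err (M * (Smu - / z))). lra.
Qed.

Lemma exp_1_lt_3 : exp 1 < 3.
Proof.
  pose proof (exp_ineq1 (- / 10) ltac:(lra)).
  assert (Hexp : exp (/ 10) * exp (- / 10) = 1) by (rewrite <- exp_plus, Rplus_opp_r; apply exp_0).
  assert (0 < exp (/ 10)) by apply exp_pos.
  assert (exp (/ 10) < 10 / 9) by nra.
  replace 1 with (10 * / 10) by lra.
  assert (Hpow : forall n x, exp (INR n * x) = exp x ^ n).
  { induction n; intros x; [simpl; rewrite Rmult_0_l; apply exp_0 |].
    rewrite S_INR, Rmult_plus_distr_r, exp_plus, IHn, Rmult_1_l. simpl. ring. }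
  replace 10 with (INR 10) at 1 by (simpl; lra). rewrite Hpow.
  apply Rle_lt_trans with ((10 / 9) ^ 10); [apply pow_incr; lra | simpl; lra].
Qed.

Lemma ln_lt_self x : 0 < x -> ln x < x.
Proof.
  intros Hx. rewrite <- (ln_exp x) at 2. apply ln_increasing; auto.
  pose proof (exp_ineq1 x ltac:(lra)). lra.
Qed.

Lemma nat_root_floor (N E : nat) : (1 <= N)%nat -> (1 <= E)%nat ->
  exists P, (1 <= P)%nat /\ (P ^ E <= N)%nat /\ (N < (P + 1) ^ E)%nat.
Proof.
  intros HN HE. induction N as [| N IH]; [lia |].
  destruct (Nat.eq_dec N 0) as [-> | HN0].
  - exists 1%nat. rewrite Nat.pow_1_l. repeat split; try lia.
    assert (2 ^ 1 <= 2 ^ E)%nat by (apply Nat.pow_le_mono_r; lia). simpl in *. lia.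
  - destruct IH as [P [H1 [H2 H3]]]; [lia |].
    destruct (Nat.eq_dec (S N) ((P + 1) ^ E)) as [E1 | E1].
    + exists (P + 1)%nat. repeat split; try lia. rewrite E1. apply Nat.pow_lt_mono_l; lia.
    + exists P. repeat split; auto; lia.
Qed.

Lemma ln_le_exponent_mul (N P E : nat) : (1 <= N)%nat -> (1 <= P)%nat ->
  (N < (P + 1) ^ E)%nat -> ln (INR N) <= INR E * INR (P * P).
Proof.
  intros HN HP HPN.
  assert (HP' : 1 <= INR P) by (apply (le_INR 1); lia).
  assert (INR P <= INR (P * P)) by (apply le_INR; nia).
  assert (ln (INR N) < INR E * ln (INR (P + 1))).
  { rewrite <- ln_pow by (apply lt_0_INR; lia).
    apply ln_increasing; [apply lt_0_INR; lia |]. rewrite <- pow_INR. apply lt_INR. auto. }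
  assert (ln (INR (P + 1)) < INR P).
  { rewrite plus_INR, INR_1. rewrite <- (ln_exp (INR P)) at 2. apply ln_increasing; [lra |].
    pose proof (exp_ineq1 (INR P) ltac:(lra)). lra. }
  pose proof (pos_INR E). nra.
Qed.

(* Since [log N <= E P^2], the power saving [N / P^2] is below [N log log N / log N]. *)
Lemma power_saving_le_loglog (N P E : nat) (K : R) :
  (3 <= N)%nat -> (1 <= P)%nat -> (1 <= E)%nat -> 0 <= K -> (N < (P + 1) ^ E)%nat ->
  K * INR N / INR (P * P) + 7
  <= (K * INR E + 7) / ln (ln 3) * (INR N * ln (ln (INR N)) / ln (INR N)).
Proof.
  intros HN HP HE HK HPN.
  assert (H3 : 3 <= INR N) by (replace 3 with (INR 3) by (simpl; lra); apply le_INR; lia).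
  assert (Hln3 : 1 < ln 3)
    by (rewrite <- (ln_exp 1); apply ln_increasing, exp_1_lt_3; apply exp_pos).
  set (lam := ln (ln 3)).
  assert (Hlam : 0 < lam) by (unfold lam; rewrite <- ln_1; apply ln_increasing; lra).
  assert (HlnN : ln 3 <= ln (INR N)) by (apply ln_le; lra).
  assert (HllN : lam <= ln (ln (INR N))) by (apply ln_le; lra).
  assert (HE' : 1 <= INR E) by (apply (le_INR 1); lia).
  assert (HPP : 1 <= INR (P * P)) by (apply (le_INR 1); nia).
  pose proof (ln_le_exponent_mul N P E ltac:(lia) HP HPN) as HlnP.
  set (W := INR N * ln (ln (INR N)) / ln (INR N)).
  assert (HlnN0 : 0 < ln (INR N)) by lra.
  assert (HW1 : lam <= W).
  { apply Rle_div_r; auto. pose proof (ln_lt_self (INR N) ltac:(lra)). nra. }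
  assert (HW2 : INR N / INR (P * P) <= INR E * W / lam).
  { assert (HPP0 : 0 < INR (P * P)) by lra. pose proof (pos_INR N).
    unfold W.
    replace (INR N / INR (P * P))
      with (INR N * lam * ln (INR N) / (INR (P * P) * lam * ln (INR N))) by (field; lra).
    replace (INR E * (INR N * ln (ln (INR N)) / ln (INR N)) / lam)
      with (INR N * ln (ln (INR N)) * (INR E * INR (P * P)) / (INR (P * P) * lam * ln (INR N)))
      by (field; lra).
    apply Rmult_le_compat_r; [apply Rlt_le, Rinv_0_lt_compat, Rmult_lt_0_compat; nra |].
    assert (INR N * lam * ln (INR N) <= INR N * lam * (INR E * INR (P * P)))
      by (apply Rmult_le_compat_l; nra).
    assert (INR N * lam * (INR E * INR (P * P)) <= INR N * ln (ln (INR N)) * (INR E * INR (P * P)))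
      by (apply Rmult_le_compat_r; nra).
    lra. }
  replace ((K * INR E + 7) / lam * W) with (K * (INR E * W / lam) + 7 * (W / lam)) by (field; lra).
  assert (1 <= W / lam) by (apply Rle_div_r; lra).
  unfold Rdiv at 1. rewrite Rmult_assoc. fold (Rdiv (INR N) (INR (P * P))). nra.
Qed.

Theorem corollary2 :
  forall alpha : R, alpha > 1 -> irrational alpha -> finite_type alpha ->
  exists C : R, forall (beta : R) (k N : nat), (2 <= k)%nat -> (3 <= N)%nat ->
    Rabs (INR (count_kfree_beatty alpha beta k N) - / alpha * / zeta_nat k * INR N)
      <= C * (INR N * ln (ln (INR N)) / ln (INR N)).
Proof.
  intros alpha Halpha Hirr Hft.
  destruct (finite_type_diophantine alpha Hirr Hft) as [c0 [T [Hc0 Hdioph]]].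
  set (E := (4 * T + 8)%nat).
  exists (((13 + / c0) * INR E + 7) / ln (ln 3)).
  intros beta k N Hk HN.
  destruct (nat_root_floor N E ltac:(lia) ltac:(unfold E; lia)) as [P [HP [HPN HNP]]].
  eapply Rle_trans; [apply (count_kfree_beatty_error alpha beta c0 T k N P); auto |].
  apply power_saving_le_loglog; auto; [unfold E; lia |].
  pose proof (Rinv_0_lt_compat c0 Hc0). lra.
Qed.
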